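(* Let $A$ be the adjacency matrix of an Erdős–Rényi graph $G(n,p)$ (symmetric, zero diagonal, independent Bernoulli$(p)$ entries above the diagonal) with $p=p_n$ satisfying $\log n/(np_n)\to0$ and $\limsup_np_n<1$. Let $D$ be the diagonal degree matrix, $\tilde A=D^{-1/2}AD^{-1/2}$, $\mathbf u=\mathbf 1/\sqrt n$ (the principal eigenvector of $\tilde P=\mathcal D^{-1/2}P\mathcal D^{-1/2}$, $P=p(\mathbf 1\mathbf 1^T-I)$, $\mathcal D=(n-1)pI$), $\tilde{\mathbf u}$ the principal unit eigenvector of $\tilde A$ (with nonnegative entries), $\tilde c=\mathbf u^T\tilde{\mathbf u}$ and $\tilde{\mathbf r}=\mathbf u-\tilde c\tilde{\mathbf u}$. Then \[ \|\tilde{\mathbf r}\|^2\sim\frac{1}{4n(n-1)p^2}\sum_i\frac{\bar d_i^2}{n}, \] where $\bar d_i=d_i-(n-1)p$.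
   Context: Asymptotics are as $n\to\infty$; $X_n\sim Y_n$ means $X_n=Y_n(1+o_P(1))$. $d_i=\sum_jA_{ij}$ is the degree of node $i$. ''Principal'' refers to the eigenvalue of largest absolute value. *)

From Stdlib Require Import Reals List Arith Bool.
Import ListNotations.
Open Scope R_scope.

Definition sumR (n : nat) (f : nat -> R) : R :=
  fold_right Rplus 0 (map f (seq 0 n)).

Definition pairs (n : nat) : list (nat * nat) :=
  flat_map (fun j => map (fun i => (i, j)) (seq 0 j)) (seq 0 n).

Fixpoint bitlists (k : nat) : list (list bool) :=
  match k with
  | O => [[]]
  | S k' => flat_map (fun l => [true :: l; false :: l]) (bitlists k')
  end.

(* a graph on vertices 0..n-1 = edge indicators for each pair in (pairs n) *)
Definition graphs (n : nat) : list (list bool) := bitlists (length (pairs n)).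

Definition edgeb (n : nat) (g : list bool) (i j : nat) : bool :=
  existsb (fun e => match e with ((x, y), b) =>
             andb b (orb (andb (Nat.eqb x i) (Nat.eqb y j)) (andb (Nat.eqb x j) (Nat.eqb y i))) end)
          (combine (pairs n) g).

Definition adj (n : nat) (g : list bool) (i j : nat) : R :=
  if edgeb n g i j then 1 else 0.

Definition deg (n : nat) (g : list bool) (i : nat) : R := sumR n (fun j => adj n g i j).

Definition nadj (n : nat) (g : list bool) (i j : nat) : R :=
  adj n g i j / (sqrt (deg n g i) * sqrt (deg n g j)).

Definition weight (p : R) (g : list bool) : R :=
  fold_right Rmult 1 (map (fun b : bool => if b then p else 1 - p) g).

Definition prob (n : nat) (p : R) (ev : list bool -> bool) : R :=
  fold_right Rplus 0 (map (fun g => weight p g * (if ev g then 1 else 0)) (graphs n)).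

Definition is_eigpair (n : nat) (M : nat -> nat -> R) (lam : R) (v : nat -> R) : Prop :=
  forall i, (i < n)%nat -> sumR n (fun j => M i j * v j) = lam * v i.

Definition eigenvalue (n : nat) (M : nat -> nat -> R) (lam : R) : Prop :=
  exists v, is_eigpair n M lam v /\ exists i, (i < n)%nat /\ v i <> 0.

Definition principal_unit_nonneg_eigvec (n : nat) (M : nat -> nat -> R) (v : nat -> R) : Prop :=
  exists lam, eigenvalue n M lam /\
    (forall mu, eigenvalue n M mu -> Rabs mu <= Rabs lam) /\
    is_eigpair n M lam v /\
    sumR n (fun i => v i ^ 2) = 1 /\
    (forall i, (i < n)%nat -> 0 <= v i).

Definition rtil_sq (n : nat) (ut : nat -> R) : R :=
  let c := sumR n (fun i => / sqrt (INR n) * ut i) in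
  sumR n (fun i => (/ sqrt (INR n) - c * ut i) ^ 2).

Definition rhs (n : nat) (p : R) (g : list bool) : R :=
  / (4 * INR n * (INR n - 1) * p ^ 2) *
  sumR n (fun i => (deg n g i - (INR n - 1) * p) ^ 2 / INR n).

Definition Rltb (a b : R) : bool := if Rlt_dec a b then true else false.

(* the event that X = Y (1 + Z) fails with |Z| <= eps *)
Definition deviates (eps X Y : R) : bool := Rltb (eps * Rabs Y) (Rabs (X - Y)).

(** The principal eigenvector of [D^{-1/2} A D^{-1/2}] of a connected graph is
    [sqrt d_i / sqrt (sum d)].  Writing [b_i = sqrt (d_i / mu)] with [mu = (n-1)p],
    the exact identity [||r~||^2 = 1 - (sum sqrt d_i)^2 / (n sum d_i)] becomes
    [(sum b_i^2 - (sum b_i)^2/n) / (n (1 + e))] with [e = sum dbar_i / (n mu)], and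
    the Taylor bound [|b_i - 1 - x_i/2| <= x_i^2/2] for [x_i = dbar_i / mu] shows that the
    sample variance of the [b_i] is [sum dbar_i^2 / (4 mu^2)] up to a factor [1 +- 3t],
    as soon as [(sum dbar_i)^2], [sum dbar_i^4] are small and [sum dbar_i^2] is not.
    Exact second and fourth moments of the degree deviations, computed by adding the
    vertices one at a time, make these three events improbable (Chebyshev/Markov), and
    a union bound over the [2^n] vertex splittings shows that [G(n,p)] is connected
    with probability [1 - O(1/n)] when [np >> log n]. *)
From Stdlib Require Import Reals List Arith Lia Lra Psatz Bool.
From Stdlib Require Import FunctionalExtensionality.
Import ListNotations.
Open Scope R_scope.

Lemma sumR_S_r n f : sumR (S n) f = sumR n f + f n.
Proof.
  unfold sumR. rewrite seq_S, map_app, fold_right_app. simpl.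
  generalize (map f (seq 0 n)). intro l. induction l; simpl; lra.
Qed.

Lemma sumR_ext n f g : (forall i, (i < n)%nat -> f i = g i) -> sumR n f = sumR n g.
Proof.
  induction n; intros H. reflexivity.
  rewrite !sumR_S_r, IHn by (intros; apply H; lia). rewrite H by lia. reflexivity.
Qed.

Lemma sumR_S_l n f : sumR (S n) f = f 0%nat + sumR n (fun i => f (S i)).
Proof.
  induction n. unfold sumR; simpl; lra.
  rewrite sumR_S_r, IHn, sumR_S_r. lra.
Qed.

Lemma sumR_plus n f g : sumR n (fun i => f i + g i) = sumR n f + sumR n g.
Proof. induction n. unfold sumR; simpl; lra. rewrite !sumR_S_r, IHn. lra. Qed.

Lemma sumR_minus n f g : sumR n (fun i => f i - g i) = sumR n f - sumR n g.
Proof. induction n. unfold sumR; simpl; lra. rewrite !sumR_S_r, IHn. lra. Qed.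

Lemma sumR_scal n c f : sumR n (fun i => c * f i) = c * sumR n f.
Proof. induction n. unfold sumR; simpl; lra. rewrite !sumR_S_r, IHn. lra. Qed.

Lemma sumR_const n c : sumR n (fun _ => c) = INR n * c.
Proof. induction n. unfold sumR; simpl; lra. rewrite !sumR_S_r, IHn, S_INR. lra. Qed.

Lemma sumR_le n f g : (forall i, (i < n)%nat -> f i <= g i) -> sumR n f <= sumR n g.
Proof.
  induction n; intros H. unfold sumR; simpl; lra.
  rewrite !sumR_S_r. assert (f n <= g n) by (apply H; lia).
  assert (sumR n f <= sumR n g) by (apply IHn; intros; apply H; lia). lra.
Qed.

Lemma sumR_nonneg n f : (forall i, (i < n)%nat -> 0 <= f i) -> 0 <= sumR n f.
Proof.
  intros H. replace 0 with (sumR n (fun _ => 0)) by (rewrite sumR_const; lra).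
  apply sumR_le; auto.
Qed.

Lemma sumR_ge_term n f i : (forall j, (j < n)%nat -> 0 <= f j) -> (i < n)%nat -> f i <= sumR n f.
Proof.
  induction n; intros H Hi. lia.
  rewrite sumR_S_r. destruct (Nat.eq_dec i n).
  - subst. assert (0 <= sumR n f) by (apply sumR_nonneg; intros; apply H; lia). lra.
  - assert (f i <= sumR n f) by (apply IHn; [intros; apply H; lia | lia]).
    assert (0 <= f n) by (apply H; lia). lra.
Qed.

Lemma sumR_pos n f : (1 <= n)%nat -> (forall i, (i < n)%nat -> 0 < f i) -> 0 < sumR n f.
Proof.
  intros Hn Hf. apply (Rlt_le_trans _ (f 0%nat)); [apply Hf; lia|].
  apply sumR_ge_term; [intros j Hj; pose proof (Hf j Hj); lra | lia].
Qed.

Lemma sumR_eq0_nonneg n f i :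
  (forall j, (j < n)%nat -> 0 <= f j) -> sumR n f = 0 -> (i < n)%nat -> f i = 0.
Proof.
  intros H H0 Hi. assert (f i <= sumR n f) by (apply sumR_ge_term; auto).
  assert (0 <= f i) by auto. lra.
Qed.

Lemma sumR_neq0_exists n f : sumR n f <> 0 -> exists i, (i < n)%nat /\ f i <> 0.
Proof.
  induction n; intros H. unfold sumR in H; simpl in H. lra.
  rewrite sumR_S_r in H. destruct (Req_dec (f n) 0).
  - destruct IHn as [i [Hi Hf]]. lra. exists i; split; auto.
  - exists n; split; auto.
Qed.

Lemma argmax_below (f : nat -> R) n :
  (1 <= n)%nat -> exists i0, (i0 < n)%nat /\ forall i, (i < n)%nat -> f i <= f i0.
Proof.
  induction n; intros Hn. lia.
  destruct (Nat.eq_dec n 0). { subst. exists 0%nat. split. lia. intros; replace i with 0%nat by lia; lra. }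
  destruct IHn as [i0 [Hi0 H]]. lia.
  destruct (Rle_dec (f n) (f i0)).
  - exists i0. split. lia. intros i Hi. destruct (Nat.eq_dec i n). subst; auto. apply H; lia.
  - exists n. split. lia. intros i Hi. destruct (Nat.eq_dec i n). subst; lra. specialize (H i ltac:(lia)). lra.
Qed.

Lemma sumR_sq_dev n f k : (1 <= n)%nat ->
  sumR n (fun i => (f i - k)^2) =
  (sumR n (fun i => f i ^2) - (sumR n f)^2 / INR n) + INR n * (sumR n f / INR n - k)^2.
Proof.
  intros Hn. assert (0 < INR n) by (apply lt_0_INR; lia).
  rewrite (sumR_ext n _ (fun i => f i ^2 + ((-2 * k) * f i + k^2))) by (intros; ring).
  rewrite !sumR_plus, sumR_scal, sumR_const. field. lra.
Qed.

Definition lsum {A} (L : list A) (F : A -> R) : R := fold_right Rplus 0 (map F L).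

Lemma lsum_app {A} (L1 L2 : list A) F : lsum (L1 ++ L2) F = lsum L1 F + lsum L2 F.
Proof. unfold lsum. rewrite map_app, fold_right_app. induction L1; simpl; [lra|]. rewrite IHL1; lra. Qed.

Lemma lsum_flat_map {A B} (L : list A) (h : A -> list B) F :
  lsum (flat_map h L) F = lsum L (fun a => lsum (h a) F).
Proof. induction L; simpl. reflexivity. rewrite lsum_app. unfold lsum in *; simpl. rewrite IHL. reflexivity. Qed.

Lemma lsum_plus {A} (L : list A) F G : lsum L (fun a => F a + G a) = lsum L F + lsum L G.
Proof. induction L; unfold lsum in *; simpl; [lra|]. rewrite IHL; lra. Qed.

Lemma lsum_minus {A} (L : list A) F G : lsum L (fun a => F a - G a) = lsum L F - lsum L G.
Proof. induction L; unfold lsum in *; simpl; [lra|]. rewrite IHL; lra. Qed.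

Lemma lsum_scal {A} (L : list A) c F : lsum L (fun a => c * F a) = c * lsum L F.
Proof. induction L; unfold lsum in *; simpl; [lra|]. rewrite IHL; lra. Qed.

Lemma lsum_le {A} (L : list A) F G : (forall a, In a L -> F a <= G a) -> lsum L F <= lsum L G.
Proof.
  induction L; intros H; unfold lsum in *; simpl; [lra|].
  assert (F a <= G a) by (apply H; simpl; auto).
  assert (fold_right Rplus 0 (map F L) <= fold_right Rplus 0 (map G L))
    by (apply IHL; intros; apply H; simpl; auto).
  lra.
Qed.

Lemma lsum_ext {A} (L : list A) F G : (forall a, In a L -> F a = G a) -> lsum L F = lsum L G.
Proof. intros H; apply Rle_antisym; apply lsum_le; intros a Ha; rewrite (H a Ha); lra. Qed.

Definition ind (b : bool) : R := if b then 1 else 0.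

Lemma ind_andb a b : ind (a && b) = ind a * ind b.
Proof. destruct a, b; simpl; lra. Qed.

Lemma ind_bounds b : 0 <= ind b <= 1.
Proof. destruct b; simpl; lra. Qed.

Lemma ind_existsb {A} (f : A -> bool) L : ind (existsb f L) <= lsum L (fun a => ind (f a)).
Proof.
  induction L; simpl. unfold lsum; simpl; lra.
  unfold lsum in *; simpl. destruct (f a); simpl; [|lra].
  assert (0 <= fold_right Rplus 0 (map (fun a0 : A => ind (f a0)) L)).
  { clear IHL. induction L; simpl. lra. pose proof (ind_bounds (f a0)). lra. }
  lra.
Qed.

(** * Expectation over independent Bernoulli bits *)

Lemma bitlists_complete k g : length g = k -> In g (bitlists k).
Proof.
  revert g; induction k; intros g H.
  - destruct g; [simpl; auto | discriminate].
  - destruct g as [|b g]; [discriminate|]. simpl in H. simpl. apply in_flat_map.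
    exists g. split. apply IHk; lia. destruct b; simpl; auto.
Qed.

Lemma lsum_bitlists_S n (F : list bool -> R) :
  lsum (bitlists (S n)) F =
  lsum (bitlists n) (fun s => F (true :: s)) + lsum (bitlists n) (fun s => F (false :: s)).
Proof.
  simpl. rewrite lsum_flat_map, <- lsum_plus. apply lsum_ext. intros s _. unfold lsum; simpl. ring.
Qed.

Definition expect (p : R) (k : nat) (f : list bool -> R) : R :=
  lsum (bitlists k) (fun g => weight p g * f g).

Lemma expect_0 p f : expect p 0 f = f [].
Proof. unfold expect, lsum; simpl. unfold weight; simpl. lra. Qed.

Lemma expect_S p k f :
  expect p (S k) f = p * expect p k (fun g => f (true :: g)) + (1 - p) * expect p k (fun g => f (false :: g)).
Proof.
  unfold expect. rewrite lsum_bitlists_S, <- !lsum_scal. f_equal; apply lsum_ext; intros a _;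
  unfold weight; simpl; ring.
Qed.

Lemma expect_plus p k f g : expect p k (fun x => f x + g x) = expect p k f + expect p k g.
Proof. revert f g; induction k; intros. rewrite !expect_0; lra. rewrite !expect_S, !IHk. lra. Qed.

Lemma expect_scal p k c f : expect p k (fun x => c * f x) = c * expect p k f.
Proof. revert f; induction k; intros. rewrite !expect_0; lra. rewrite !expect_S, !IHk. lra. Qed.

Lemma expect_const p k c : expect p k (fun _ => c) = c.
Proof. induction k. rewrite expect_0; lra. rewrite expect_S, IHk. lra. Qed.

Lemma expect_ext p k f g : (forall x, length x = k -> f x = g x) -> expect p k f = expect p k g.
Proof.
  revert f g; induction k; intros f g H.
  - rewrite !expect_0; apply H; reflexivity.
  - rewrite !expect_S.
    rewrite (IHk (fun x => f (true :: x)) (fun x => g (true :: x))) by (intros; apply H; simpl; lia).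
    rewrite (IHk (fun x => f (false :: x)) (fun x => g (false :: x))) by (intros; apply H; simpl; lia).
    reflexivity.
Qed.

Lemma expect_le p k f g :
  0 <= p <= 1 -> (forall x, length x = k -> f x <= g x) -> expect p k f <= expect p k g.
Proof.
  intros Hp. revert f g; induction k; intros f g H.
  - rewrite !expect_0; apply H; reflexivity.
  - rewrite !expect_S.
    assert (expect p k (fun x => f (true :: x)) <= expect p k (fun x => g (true :: x)))
      by (apply IHk; intros; apply H; simpl; lia).
    assert (expect p k (fun x => f (false :: x)) <= expect p k (fun x => g (false :: x)))
      by (apply IHk; intros; apply H; simpl; lia).
    nra.
Qed.

Lemma expect_app p k m f :
  expect p (k + m) f = expect p k (fun g1 => expect p m (fun g2 => f (g1 ++ g2))).
Proof.
  revert f; induction k; intros f.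
  - rewrite expect_0. reflexivity.
  - simpl plus. rewrite !expect_S, !IHk. reflexivity.
Qed.

Lemma expect_lsum {A} p k (L : list A) (F : A -> list bool -> R) :
  expect p k (fun g => lsum L (fun a => F a g)) = lsum L (fun a => expect p k (F a)).
Proof.
  induction L; unfold lsum in *; simpl.
  - apply expect_const.
  - rewrite expect_plus, <- IHL. reflexivity.
Qed.

Lemma expect_markov p k f (ev : list bool -> bool) a : 0 <= p <= 1 -> 0 < a ->
  (forall g, length g = k -> a * ind (ev g) <= f g) -> expect p k (fun g => ind (ev g)) <= expect p k f / a.
Proof.
  intros Hp Ha H. unfold Rdiv. rewrite Rmult_comm, <- expect_scal. apply expect_le; auto.
  intros g Hg. specialize (H g Hg). apply (Rmult_le_reg_l a); auto.
  rewrite <- Rmult_assoc, Rinv_r, Rmult_1_l by lra. exact H.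
Qed.

Lemma prob_expect n p ev : prob n p ev = expect p (length (pairs n)) (fun g => ind (ev g)).
Proof. reflexivity. Qed.

Lemma prob_nonneg n p ev : 0 <= p <= 1 -> 0 <= prob n p ev.
Proof.
  intros Hp. rewrite prob_expect, <- (expect_const p (length (pairs n)) 0).
  apply expect_le; auto. intros. pose proof (ind_bounds (ev x)). lra.
Qed.

(** A graph on [S n] vertices is [g1 ++ g2], with [g1] a graph on the first [n]
    vertices and [g2] the [n] indicators of the edges [{i, n}]. *)

Lemma pairs_S n : pairs (S n) = pairs n ++ map (fun i => (i, n)) (seq 0 n).
Proof. unfold pairs. rewrite seq_S, flat_map_app. simpl. rewrite app_nil_r. reflexivity. Qed.

Lemma length_pairs_S n : length (pairs (S n)) = (length (pairs n) + n)%nat.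
Proof. rewrite pairs_S, length_app, length_map, length_seq. reflexivity. Qed.

Lemma expect_graph_S p n f : expect p (length (pairs (S n))) f =
  expect p (length (pairs n)) (fun g1 => expect p n (fun g2 => f (g1 ++ g2))).
Proof. rewrite length_pairs_S. apply expect_app. Qed.

Lemma in_pairs_lt n x y : In (x, y) (pairs n) -> (x < y < n)%nat.
Proof.
  unfold pairs. intros H. apply in_flat_map in H. destruct H as [j [Hj H]].
  apply in_map_iff in H. destruct H as [i [Hi Hi2]]. inversion Hi; subst.
  apply in_seq in Hj. apply in_seq in Hi2. lia.
Qed.

Definition edge_hits (i j : nat) (e : nat * nat * bool) : bool :=
  match e with ((x, y), b) =>
    andb b (orb (andb (Nat.eqb x i) (Nat.eqb y j)) (andb (Nat.eqb x j) (Nat.eqb y i))) end.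

Lemma edgeb_sym n g i j : edgeb n g i j = edgeb n g j i.
Proof.
  unfold edgeb. induction (combine (pairs n) g) as [|[[x y] b] l IH]; simpl; auto.
  rewrite IH, (orb_comm ((x =? i) && _)). reflexivity.
Qed.

Lemma edgeb_out n g i j : (n <= i \/ n <= j)%nat -> edgeb n g i j = false.
Proof.
  intros Hij. unfold edgeb. destruct (existsb _ _) eqn:E; auto.
  apply existsb_exists in E. destruct E as [[[x y] b] [Hin Hf]].
  apply in_combine_l, in_pairs_lt in Hin.
  apply andb_true_iff in Hf. destruct Hf as [_ Hf].
  apply orb_true_iff in Hf. destruct Hf as [Hf|Hf]; apply andb_true_iff in Hf; destruct Hf as [H1 H2];
  apply Nat.eqb_eq in H1; apply Nat.eqb_eq in H2; subst; lia.
Qed.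

Lemma combine_app {A B} (l1 l2 : list A) (g1 g2 : list B) :
  length l1 = length g1 -> combine (l1 ++ l2) (g1 ++ g2) = combine l1 g1 ++ combine l2 g2.
Proof.
  revert g1; induction l1; intros g1 H; destruct g1; simpl in *; try discriminate; auto.
  rewrite IHl1 by lia. reflexivity.
Qed.

Lemma edgeb_app n g1 g2 i j : length g1 = length (pairs n) ->
  edgeb (S n) (g1 ++ g2) i j =
  edgeb n g1 i j || existsb (edge_hits i j) (combine (map (fun x => (x, n)) (seq 0 n)) g2).
Proof.
  intros H. unfold edgeb. rewrite pairs_S, combine_app by auto. rewrite existsb_app. reflexivity.
Qed.

Lemma new_edges_miss_old n s m g2 i j : (s + m <= n)%nat -> (i < n)%nat -> (j < n)%nat ->
  existsb (edge_hits i j) (combine (map (fun x => (x, n)) (seq s m)) g2) = false.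
Proof.
  revert s g2; induction m; intros s g2 Hs Hi Hj; simpl. reflexivity.
  destruct g2 as [|b g2]; simpl. reflexivity.
  rewrite IHm by lia.
  destruct (Nat.eqb_spec n j); [lia|]. destruct (Nat.eqb_spec n i); [lia|].
  destruct b, (s =? i), (s =? j); reflexivity.
Qed.

Lemma new_edges_miss_loop n s m g2 : (s + m <= n)%nat ->
  existsb (edge_hits n n) (combine (map (fun x => (x, n)) (seq s m)) g2) = false.
Proof.
  revert s g2; induction m; intros s g2 Hs; simpl. reflexivity.
  destruct g2 as [|b g2]; simpl. reflexivity.
  rewrite IHm by lia.
  destruct (Nat.eqb_spec s n); [lia|]. destruct b; reflexivity.
Qed.

Lemma new_edges_hit_last n s m g2 i : (s + m <= n)%nat -> (i < n)%nat ->
  existsb (edge_hits i n) (combine (map (fun x => (x, n)) (seq s m)) g2) =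
  (s <=? i) && (i <? s + m) && nth (i - s) g2 false.
Proof.
  revert s g2; induction m; intros s g2 Hs Hi; simpl.
  { destruct (Nat.leb_spec s i); destruct (Nat.ltb_spec i (s + 0)); simpl; auto; lia. }
  destruct g2 as [|b g2].
  { simpl. destruct (i - s)%nat; simpl; rewrite !andb_false_r; reflexivity. }
  cbn [seq map combine existsb]. rewrite IHm by lia. cbn [edge_hits].
  destruct (Nat.eqb_spec s n); [lia|]. destruct (Nat.eqb_spec n i); [lia|].
  rewrite Nat.eqb_refl.
  destruct (Nat.eqb_spec s i).
  - subst. rewrite Nat.sub_diag.
    replace (i <=? i)%nat with true by (symmetry; apply Nat.leb_le; lia).
    replace (S i <=? i)%nat with false by (symmetry; apply Nat.leb_gt; lia).
    replace (i <? i + S m)%nat with true by (symmetry; apply Nat.ltb_lt; lia).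
    destruct b; reflexivity.
  - rewrite ?andb_false_r, ?andb_false_l, ?orb_false_l.
    destruct (Nat.leb_spec (S s) i).
    + replace (s <=? i)%nat with true by (symmetry; apply Nat.leb_le; lia).
      replace (i - s)%nat with (S (i - S s)) by lia. cbn [nth].
      replace (S s + m)%nat with (s + S m)%nat by lia. reflexivity.
    + replace (s <=? i)%nat with false by (symmetry; apply Nat.leb_gt; lia). reflexivity.
Qed.

Lemma edgeb_app_lt n g1 g2 i j : length g1 = length (pairs n) -> (i < n)%nat -> (j < n)%nat ->
  edgeb (S n) (g1 ++ g2) i j = edgeb n g1 i j.
Proof.
  intros H Hi Hj. rewrite edgeb_app, new_edges_miss_old by (auto; lia). apply orb_false_r.
Qed.

Lemma edgeb_app_last n g1 g2 i : length g1 = length (pairs n) -> (i < n)%nat ->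
  edgeb (S n) (g1 ++ g2) i n = nth i g2 false.
Proof.
  intros H Hi. rewrite edgeb_app, edgeb_out, new_edges_hit_last by (auto; lia).
  simpl. rewrite Nat.sub_0_r. destruct (Nat.ltb_spec i n); [reflexivity | lia].
Qed.

Lemma edgeb_app_loop n g1 g2 : length g1 = length (pairs n) -> edgeb (S n) (g1 ++ g2) n n = false.
Proof. intros H. rewrite edgeb_app, edgeb_out, new_edges_miss_loop by (auto; lia). reflexivity. Qed.

Lemma adj_sym n g i j : adj n g i j = adj n g j i.
Proof. unfold adj. rewrite edgeb_sym. reflexivity. Qed.

Lemma adj_nonneg n g i j : 0 <= adj n g i j.
Proof. unfold adj. destruct edgeb; lra. Qed.

Lemma deg_nonneg n g i : 0 <= deg n g i.
Proof. unfold deg. apply sumR_nonneg. intros; apply adj_nonneg. Qed.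

Lemma deg_app_lt n g1 g2 i : length g1 = length (pairs n) -> (i < n)%nat ->
  deg (S n) (g1 ++ g2) i = deg n g1 i + ind (nth i g2 false).
Proof.
  intros H Hi. unfold deg. rewrite sumR_S_r. unfold adj at 2. rewrite edgeb_app_last by auto.
  f_equal. apply sumR_ext. intros j Hj. unfold adj. rewrite edgeb_app_lt; auto.
Qed.

Lemma deg_app_last n g1 g2 : length g1 = length (pairs n) ->
  deg (S n) (g1 ++ g2) n = sumR n (fun j => ind (nth j g2 false)).
Proof.
  intros H. unfold deg. rewrite sumR_S_r. unfold adj at 2. rewrite edgeb_app_loop, Rplus_0_r by auto.
  apply sumR_ext. intros j Hj. rewrite adj_sym. unfold adj. rewrite edgeb_app_last; auto.
Qed.

(** * Moments of sums of centred Bernoulli bits *)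

Section CentredSums.
Variable p : R.

Fixpoint csum (g : list bool) : R :=
  match g with [] => 0 | b :: g' => (ind b - p) + csum g' end.
Fixpoint csum_sq (g : list bool) : R :=
  match g with [] => 0 | b :: g' => (ind b - p)^2 + csum_sq g' end.
Fixpoint cwsum (c : nat -> R) (g : list bool) : R :=
  match g with [] => 0 | b :: g' => c 0%nat * (ind b - p) + cwsum (fun i => c (S i)) g' end.

Definition mom3 := p * (1 - p)^3 + (1 - p) * (- p)^3.
Definition mom4 := p * (1 - p)^4 + (1 - p) * p^4.

Lemma mom4_bounds : 0 <= p <= 1 -> 0 <= mom4 <= p * (1 - p).
Proof.
  intros Hp. unfold mom4. assert (0 <= p * (1-p)) by nra.
  assert (0 <= p^3) by (apply pow_le; lra). assert (0 <= (1-p)^3) by (apply pow_le; lra).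
  split. { assert (0 <= p^4) by (apply pow_le; lra). assert (0 <= (1-p)^4) by (apply pow_le; lra). nra. }
  replace (p * (1 - p) ^ 4 + (1 - p) * p ^ 4) with (p * (1-p) * ((1-p)^3 + p^3)) by ring.
  assert ((1-p)^3 + p^3 <= 1) by (replace ((1-p)^3 + p^3) with (1 - 3 * (p * (1-p))) by ring; lra).
  nra.
Qed.

Lemma expect_sq_shift k a f :
  expect p k (fun g => (a + f g)^2) = a^2 + 2 * a * expect p k f + expect p k (fun g => f g ^2).
Proof.
  rewrite (expect_ext p k _ (fun g => a^2 + ((2*a) * f g + f g ^2))) by (intros; ring).
  rewrite !expect_plus, expect_const, expect_scal. ring.
Qed.

Lemma expect_pow4_shift k a f : expect p k (fun g => (a + f g)^4) =
  a^4 + 4 * a^3 * expect p k f + 6 * a^2 * expect p k (fun g => f g^2)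
  + 4 * a * expect p k (fun g => f g^3) + expect p k (fun g => f g^4).
Proof.
  rewrite (expect_ext p k _ (fun g => a^4 + ((4*a^3) * f g + ((6*a^2) * f g^2 + ((4*a) * f g^3 + f g^4)))))
    by (intros; ring).
  rewrite !expect_plus, expect_const, !expect_scal. ring.
Qed.

Lemma expect_mul_shift k a b f h : expect p k (fun g => (a + f g) * (b + h g)) =
  a * b + a * expect p k h + b * expect p k f + expect p k (fun g => f g * h g).
Proof.
  rewrite (expect_ext p k _ (fun g => a*b + (a * h g + (b * f g + f g * h g)))) by (intros; ring).
  rewrite !expect_plus, expect_const, !expect_scal. ring.
Qed.

Lemma expect_mul_sq_shift k a b f h : expect p k (fun g => (a + f g) * (b + h g)^2) =
  a * b^2 + 2*a*b * expect p k h + a * expect p k (fun g => h g^2) + b^2 * expect p k f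
  + 2 * b * expect p k (fun g => f g * h g) + expect p k (fun g => f g * h g^2).
Proof.
  rewrite (expect_ext p k _ (fun g => a*b^2 + ((2*a*b) * h g + (a * h g^2 + (b^2 * f g +
     ((2*b) * (f g * h g) + f g * h g^2)))))) by (intros; ring).
  rewrite !expect_plus, expect_const, !expect_scal. ring.
Qed.

Lemma expect_csum m : expect p m csum = 0.
Proof.
  induction m. rewrite expect_0; reflexivity.
  rewrite expect_S. cbn [csum ind]. rewrite !expect_plus, !expect_const, IHm. ring.
Qed.

Lemma expect_csum2 m : expect p m (fun g => csum g ^2) = INR m * (p * (1 - p)).
Proof.
  induction m. rewrite expect_0; simpl; ring.
  rewrite expect_S. cbn [csum ind]. rewrite !expect_sq_shift, expect_csum, IHm, S_INR. ring.
Qed.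

Lemma expect_csum4 m :
  expect p m (fun g => csum g ^4) = INR m * mom4 + 3 * INR m * (INR m - 1) * (p * (1 - p))^2.
Proof.
  induction m. rewrite expect_0; simpl; ring.
  rewrite expect_S. cbn [csum ind].
  rewrite !expect_pow4_shift, expect_csum, expect_csum2, IHm, S_INR. unfold mom4. ring.
Qed.

Lemma expect_csum_sq m : expect p m csum_sq = INR m * (p * (1 - p)).
Proof.
  induction m. rewrite expect_0; simpl; ring.
  rewrite expect_S. cbn [csum_sq ind]. rewrite !expect_plus, !expect_const, IHm, S_INR. ring.
Qed.

Lemma expect_csum_sq2 m :
  expect p m (fun g => csum_sq g ^2) = INR m * mom4 + INR m * (INR m - 1) * (p * (1 - p))^2.
Proof.
  induction m. rewrite expect_0; simpl; ring.
  rewrite expect_S. cbn [csum_sq ind]. rewrite !expect_sq_shift, expect_csum_sq, IHm, S_INR.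
  unfold mom4. ring.
Qed.

Lemma expect_csum_sq_csum2 m :
  expect p m (fun g => csum_sq g * csum g ^2) = INR m * mom4 + INR m * (INR m - 1) * (p * (1 - p))^2.
Proof.
  induction m. rewrite expect_0; simpl; ring.
  rewrite expect_S. cbn [csum_sq csum ind].
  rewrite !expect_mul_sq_shift, expect_csum_sq, expect_csum, expect_csum2, IHm, S_INR. unfold mom4. ring.
Qed.

Lemma expect_cwsum m c : expect p m (cwsum c) = 0.
Proof.
  revert c; induction m; intros c. rewrite expect_0; reflexivity.
  rewrite expect_S. cbn [cwsum ind]. rewrite !expect_plus, !expect_const, IHm. ring.
Qed.

Lemma expect_cwsum2 m c :
  expect p m (fun g => cwsum c g ^2) = p * (1 - p) * sumR m (fun i => c i ^2).
Proof.
  revert c; induction m; intros c. rewrite expect_0; simpl; unfold sumR; simpl; ring.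
  rewrite expect_S. cbn [cwsum ind]. rewrite !expect_sq_shift, expect_cwsum, IHm, sumR_S_l. ring.
Qed.

Lemma expect_cwsum_csum_sq m c : expect p m (fun g => cwsum c g * csum_sq g) = mom3 * sumR m c.
Proof.
  revert c; induction m; intros c. rewrite expect_0; simpl; unfold sumR; simpl; ring.
  rewrite expect_S. cbn [cwsum csum_sq ind].
  rewrite !expect_mul_shift, expect_cwsum, expect_csum_sq, IHm, sumR_S_l. unfold mom3. ring.
Qed.

Lemma expect_cwsum_csum2 m c : expect p m (fun g => cwsum c g * csum g ^2) = mom3 * sumR m c.
Proof.
  revert c; induction m; intros c. rewrite expect_0; simpl; unfold sumR; simpl; ring.
  rewrite expect_S. cbn [cwsum csum ind].
  rewrite !expect_mul_sq_shift, expect_cwsum, expect_csum, expect_csum2, IHm, sumR_S_l.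
  unfold mom3. ring.
Qed.

Lemma expect_sumR_bits m (F : nat -> bool -> R) :
  expect p m (fun g => sumR m (fun i => F i (nth i g false))) =
  sumR m (fun i => p * F i true + (1 - p) * F i false).
Proof.
  revert F; induction m; intros F. rewrite expect_0; reflexivity.
  rewrite expect_S.
  rewrite !(expect_ext p m (fun g => sumR (S m) (fun i => F i (nth i (_ :: g) false)))
     (fun g => _ + sumR m (fun i => F (S i) (nth i g false)))) by (intros; rewrite sumR_S_l; reflexivity).
  cbn [nth]. rewrite !expect_plus, !expect_const, (IHm (fun i b => F (S i) b)), (sumR_S_l m).
  ring.
Qed.

Lemma csum_sumR g : csum g = sumR (length g) (fun i => ind (nth i g false) - p).
Proof. induction g; simpl. reflexivity. rewrite sumR_S_l. simpl. rewrite IHg. reflexivity. Qed.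

Lemma csum_sq_sumR g : csum_sq g = sumR (length g) (fun i => (ind (nth i g false) - p)^2).
Proof. induction g; simpl. reflexivity. rewrite sumR_S_l. simpl. rewrite IHg. reflexivity. Qed.

Lemma cwsum_sumR c g : cwsum c g = sumR (length g) (fun i => c i * (ind (nth i g false) - p)).
Proof. revert c; induction g; intros c; simpl. reflexivity. rewrite sumR_S_l. simpl. rewrite IHg. reflexivity. Qed.

End CentredSums.

(** * Moments of the degree deviations *)

Definition dbar n p g i := deg n g i - (INR n - 1) * p.
Definition sum_dbar n p g := sumR n (dbar n p g).
Definition sum_dbar2 n p g := sumR n (fun i => dbar n p g i ^ 2).
Definition sum_dbar4 n p g := sumR n (fun i => dbar n p g i ^ 4).

Section DegreeMoments.
Variable p : R.

Lemma dbar_app_lt n g1 g2 i : length g1 = length (pairs n) -> (i < n)%nat ->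
  dbar (S n) p (g1 ++ g2) i = dbar n p g1 i + (ind (nth i g2 false) - p).
Proof. intros H Hi. unfold dbar. rewrite deg_app_lt by auto. rewrite S_INR. ring. Qed.

Lemma dbar_app_last n g1 g2 : length g1 = length (pairs n) -> length g2 = n ->
  dbar (S n) p (g1 ++ g2) n = csum p g2.
Proof.
  intros H H2. unfold dbar.
  rewrite deg_app_last, csum_sumR, H2, sumR_minus, sumR_const, S_INR by auto. ring.
Qed.

Lemma sum_dbar_app n g1 g2 : length g1 = length (pairs n) -> length g2 = n ->
  sum_dbar (S n) p (g1 ++ g2) = sum_dbar n p g1 + 2 * csum p g2.
Proof.
  intros H H2. unfold sum_dbar. rewrite sumR_S_r, dbar_app_last by auto.
  rewrite (sumR_ext n _ (fun i => dbar n p g1 i + (ind (nth i g2 false) - p)))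
    by (intros; apply dbar_app_lt; auto).
  rewrite sumR_plus, (csum_sumR p g2), H2. ring.
Qed.

Lemma sum_dbar2_app n g1 g2 : length g1 = length (pairs n) -> length g2 = n ->
  sum_dbar2 (S n) p (g1 ++ g2) =
  sum_dbar2 n p g1 + 2 * cwsum p (dbar n p g1) g2 + csum_sq p g2 + csum p g2 ^ 2.
Proof.
  intros H H2. unfold sum_dbar2. rewrite sumR_S_r, dbar_app_last by auto.
  rewrite (sumR_ext n _ (fun i => dbar n p g1 i ^2 + (2 * (dbar n p g1 i * (ind (nth i g2 false) - p))
                                  + (ind (nth i g2 false) - p)^2)))
    by (intros; rewrite dbar_app_lt by auto; ring).
  rewrite !sumR_plus, sumR_scal, cwsum_sumR, csum_sq_sumR, H2. ring.
Qed.

Lemma sum_dbar4_app n g1 g2 : length g1 = length (pairs n) -> length g2 = n ->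
  sum_dbar4 (S n) p (g1 ++ g2) =
  sumR n (fun i => (dbar n p g1 i + (ind (nth i g2 false) - p))^4) + csum p g2 ^ 4.
Proof.
  intros H H2. unfold sum_dbar4. rewrite sumR_S_r, dbar_app_last by auto. f_equal.
  apply sumR_ext. intros; rewrite dbar_app_lt by auto; ring.
Qed.

Lemma expect_sum_dbar n : expect p (length (pairs n)) (sum_dbar n p) = 0.
Proof.
  induction n. { rewrite expect_0. reflexivity. }
  rewrite expect_graph_S, <- IHn. apply expect_ext. intros g1 H1.
  rewrite (expect_ext p n _ (fun g2 => sum_dbar n p g1 + 2 * csum p g2))
    by (intros; apply sum_dbar_app; auto).
  rewrite expect_plus, expect_const, expect_scal, expect_csum. ring.
Qed.

Lemma expect_sum_dbar_sq n :
  expect p (length (pairs n)) (fun g => sum_dbar n p g ^ 2) = 2 * INR n * (INR n - 1) * (p * (1 - p)).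
Proof.
  induction n. { rewrite expect_0. unfold sum_dbar, sumR. simpl. ring. }
  rewrite expect_graph_S.
  rewrite (expect_ext p _ _ (fun g1 => sum_dbar n p g1 ^2 + 4 * INR n * (p * (1 - p)))).
  { rewrite expect_plus, expect_const, IHn, S_INR. ring. }
  intros g1 H1.
  rewrite (expect_ext p n _ (fun g2 => (sum_dbar n p g1 + (fun g => 2 * csum p g) g2)^2))
    by (intros; rewrite sum_dbar_app; auto).
  rewrite expect_sq_shift, expect_scal, expect_csum.
  rewrite (expect_ext p n _ (fun g2 => 4 * csum p g2 ^2)) by (intros; cbv beta; ring).
  rewrite expect_scal, expect_csum2. ring.
Qed.

Lemma expect_sum_dbar2 n :
  expect p (length (pairs n)) (sum_dbar2 n p) = INR n * (INR n - 1) * (p * (1 - p)).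
Proof.
  induction n. { rewrite expect_0. unfold sum_dbar2, sumR. simpl. ring. }
  rewrite expect_graph_S.
  rewrite (expect_ext p _ _ (fun g1 => sum_dbar2 n p g1 + 2 * INR n * (p * (1 - p)))).
  { rewrite expect_plus, expect_const, IHn, S_INR. ring. }
  intros g1 H1.
  rewrite (expect_ext p n _ (fun g2 => sum_dbar2 n p g1
             + (2 * cwsum p (dbar n p g1) g2 + (csum_sq p g2 + csum p g2 ^ 2))))
    by (intros; rewrite sum_dbar2_app by auto; ring).
  rewrite !expect_plus, expect_const, expect_scal, expect_cwsum, expect_csum_sq, expect_csum2. ring.
Qed.

Lemma expect_sumR_shift_pow4 n (c : nat -> R) :
  expect p n (fun g2 => sumR n (fun i => (c i + (ind (nth i g2 false) - p))^4)) =
  sumR n (fun i => c i ^4) + 6 * (p * (1 - p)) * sumR n (fun i => c i ^2)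
  + 4 * mom3 p * sumR n c + INR n * mom4 p.
Proof.
  rewrite (expect_sumR_bits p n (fun i b => (c i + (ind b - p))^4)).
  rewrite <- !sumR_scal, <- sumR_const, <- !sumR_plus. apply sumR_ext. intros; simpl; unfold mom3, mom4; ring.
Qed.

Lemma expect_sum_dbar4_S n : expect p (length (pairs (S n))) (sum_dbar4 (S n) p) =
  expect p (length (pairs n)) (sum_dbar4 n p) + 6 * (p * (1 - p)) * (INR n * (INR n - 1) * (p * (1 - p)))
  + 2 * INR n * mom4 p + 3 * INR n * (INR n - 1) * (p * (1 - p))^2.
Proof.
  rewrite expect_graph_S.
  rewrite (expect_ext p _ _ (fun g1 => sum_dbar4 n p g1 + ((6 * (p * (1 - p))) * sum_dbar2 n p g1
       + ((4 * mom3 p) * sum_dbar n p g1 + (2 * INR n * mom4 p + 3 * INR n * (INR n - 1) * (p * (1 - p))^2))))).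
  { rewrite !expect_plus, !expect_scal, !expect_const, expect_sum_dbar2, expect_sum_dbar. ring. }
  intros g1 H1.
  rewrite (expect_ext p n _ (fun g2 => sumR n (fun i => (dbar n p g1 i + (ind (nth i g2 false) - p))^4)
                                       + csum p g2 ^4))
    by (intros; apply sum_dbar4_app; auto).
  rewrite expect_plus, expect_sumR_shift_pow4, expect_csum4. unfold sum_dbar4, sum_dbar2, sum_dbar. ring.
Qed.

Lemma expect_sum_dbar4_le n : 0 <= p <= 1 ->
  expect p (length (pairs n)) (sum_dbar4 n p) <= 3 * INR n ^ 3 * (p * (1 - p))^2 + INR n ^ 2 * (p * (1 - p)).
Proof.
  intros Hp. destruct (mom4_bounds p Hp) as [HM1 HM2]. set (s := p * (1 - p)) in *.
  assert (0 <= s) by (unfold s; nra).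
  induction n. { rewrite expect_0. unfold sum_dbar4, sumR. simpl. nra. }
  rewrite expect_sum_dbar4_S. fold s. rewrite S_INR.
  assert (0 <= INR n) by apply pos_INR.
  assert (INR n * mom4 p <= INR n * s) by nra.
  assert (0 <= INR n * s * s) by nra.
  nra.
Qed.

Lemma expect_sum_dbar2_sq_S n : expect p (length (pairs (S n))) (fun g => sum_dbar2 (S n) p g ^2) =
  expect p (length (pairs n)) (fun g => sum_dbar2 n p g ^2)
  + (4 * INR n + 4) * (p * (1 - p)) * (INR n * (INR n - 1) * (p * (1 - p)))
  + 4 * INR n * mom4 p + 6 * INR n * (INR n - 1) * (p * (1 - p))^2.
Proof.
  rewrite expect_graph_S.
  rewrite (expect_ext p _ _ (fun g1 => sum_dbar2 n p g1 ^2
       + (((4 * INR n + 4) * (p * (1 - p))) * sum_dbar2 n p g1 + ((8 * mom3 p) * sum_dbar n p g1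
       + (4 * INR n * mom4 p + 6 * INR n * (INR n - 1) * (p * (1 - p))^2))))).
  { rewrite !expect_plus, !expect_scal, !expect_const, expect_sum_dbar2, expect_sum_dbar. ring. }
  intros g1 H1.
  rewrite (expect_ext p n _ (fun g2 => (sum_dbar2 n p g1
             + (fun g => 2 * cwsum p (dbar n p g1) g + (csum_sq p g + csum p g ^ 2)) g2)^2))
    by (intros; rewrite sum_dbar2_app by auto; ring).
  rewrite expect_sq_shift, !expect_plus, expect_scal, expect_cwsum, expect_csum_sq, expect_csum2.
  rewrite (expect_ext p n (fun g => (2 * cwsum p (dbar n p g1) g + (csum_sq p g + csum p g ^ 2))^2)
     (fun g => 4 * cwsum p (dbar n p g1) g ^2 + (csum_sq p g ^2 + (csum p g ^4
        + (4 * (cwsum p (dbar n p g1) g * csum_sq p g)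
        + (4 * (cwsum p (dbar n p g1) g * csum p g ^2) + 2 * (csum_sq p g * csum p g ^2)))))))
    by (intros; ring).
  rewrite !expect_plus, !expect_scal, expect_cwsum2, expect_csum_sq2, expect_csum4,
    expect_cwsum_csum_sq, expect_cwsum_csum2, expect_csum_sq_csum2.
  unfold sum_dbar2, sum_dbar. ring.
Qed.

Lemma expect_sum_dbar2_sq_le n : 0 <= p <= 1 ->
  expect p (length (pairs n)) (fun g => sum_dbar2 n p g ^2) <=
  (INR n * (INR n - 1) * (p * (1 - p)))^2 + 2 * INR n ^3 * (p * (1 - p))^2 + 2 * INR n ^2 * (p * (1 - p)).
Proof.
  intros Hp. destruct (mom4_bounds p Hp) as [HM1 HM2]. set (s := p * (1 - p)) in *.
  assert (0 <= s) by (unfold s; nra).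
  induction n. { rewrite expect_0. unfold sum_dbar2, sumR. simpl. nra. }
  rewrite expect_sum_dbar2_sq_S. fold s. rewrite S_INR.
  assert (0 <= INR n) by apply pos_INR.
  assert (INR n * mom4 p <= INR n * s) by nra.
  assert (0 <= INR n * s * s) by nra.
  nra.
Qed.

End DegreeMoments.

(** * Connectivity *)

Fixpoint count_true (n : nat) (f : nat -> bool) : nat :=
  match n with O => O | S n' => (count_true n' f + (if f n' then 1 else 0))%nat end.

Lemma count_true_S_l n f :
  count_true (S n) f = ((if f 0%nat then 1 else 0) + count_true n (fun i => f (S i)))%nat.
Proof. induction n; simpl in *. lia. rewrite IHn. lia. Qed.

Lemma count_true_ext n f g : (forall i, (i < n)%nat -> f i = g i) -> count_true n f = count_true n g.
Proof.
  induction n; intros H; simpl. auto. rewrite IHn by (intros; apply H; lia). rewrite H by lia. auto.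
Qed.

Lemma count_true_negb n f : (count_true n f + count_true n (fun i => negb (f i)) = n)%nat.
Proof. induction n; simpl. auto. destruct (f n); simpl; lia. Qed.

Lemma count_true_neq0 n f i : (i < n)%nat -> f i = true -> count_true n f <> 0%nat.
Proof.
  induction n; intros Hi Hf. lia. simpl. destruct (Nat.eq_dec i n). subst. rewrite Hf. lia.
  specialize (IHn ltac:(lia) Hf). lia.
Qed.

Definition all_below (n : nat) (P : nat -> bool) : bool := forallb P (seq 0 n).

Lemma all_belowP n P : all_below n P = true <-> (forall i, (i < n)%nat -> P i = true).
Proof.
  unfold all_below. rewrite forallb_forall. split; intros H i Hi.
  apply H. apply in_seq. lia. apply in_seq in Hi. apply H. lia.
Qed.

Lemma all_below_S_l n P : all_below (S n) P = P 0%nat && all_below n (fun i => P (S i)).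
Proof.
  apply eq_true_iff_eq. rewrite andb_true_iff, !all_belowP. split.
  - intros H. split. apply H; lia. intros; apply H; lia.
  - intros [H0 H] i Hi. destruct i. auto. apply H. lia.
Qed.

Definition no_edge_across n (s : nat -> bool) (g : list bool) : bool :=
  all_below n (fun i => all_below n (fun j => implb (s i && negb (s j)) (negb (edgeb n g i j)))).

Lemma no_edge_acrossP n s g : no_edge_across n s g = true <->
  (forall i j, (i < n)%nat -> (j < n)%nat -> s i = true -> s j = false -> edgeb n g i j = false).
Proof.
  unfold no_edge_across. rewrite all_belowP. split.
  - intros H i j Hi Hj Hs1 Hs2. specialize (H i Hi). rewrite all_belowP in H. specialize (H j Hj).
    rewrite Hs1, Hs2 in H. simpl in H. destruct (edgeb n g i j); auto.
  - intros H i Hi. rewrite all_belowP. intros j Hj.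
    destruct (s i) eqn:E1; destruct (s j) eqn:E2; simpl; auto. rewrite H; auto.
Qed.

Definition no_new_edge_across n (s : nat -> bool) (g2 : list bool) : bool :=
  all_below n (fun i => implb (xorb (s i) (s n)) (negb (nth i g2 false))).

Lemma no_edge_across_app n s g1 g2 : length g1 = length (pairs n) ->
  no_edge_across (S n) s (g1 ++ g2) = no_edge_across n s g1 && no_new_edge_across n s g2.
Proof.
  intros Hl. apply eq_true_iff_eq.
  rewrite andb_true_iff, !no_edge_acrossP. unfold no_new_edge_across. rewrite all_belowP.
  split.
  - intros H. split.
    + intros i j Hi Hj H1 H2. rewrite <- edgeb_app_lt with (g2 := g2) by auto. apply H; auto; lia.
    + intros i Hi. destruct (s i) eqn:E1; destruct (s n) eqn:E2; simpl; auto.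
      * rewrite <- (edgeb_app_last n g1 g2 i) by auto. rewrite H; auto; lia.
      * rewrite <- (edgeb_app_last n g1 g2 i), edgeb_sym by auto. rewrite H; auto; lia.
  - intros [H1 H2] i j Hi Hj Hs1 Hs2.
    destruct (Nat.eq_dec i n); destruct (Nat.eq_dec j n); subst; try congruence.
    + assert (j < n)%nat by lia. rewrite edgeb_sym, edgeb_app_last by auto. specialize (H2 j H).
      rewrite Hs1, Hs2 in H2. simpl in H2. destruct (nth j g2 false); auto.
    + assert (i < n)%nat by lia. rewrite edgeb_app_last by auto. specialize (H2 i H).
      rewrite Hs1, Hs2 in H2. simpl in H2. destruct (nth i g2 false); auto.
    + rewrite edgeb_app_lt by (auto; lia). apply H1; auto; lia.
Qed.

Lemma expect_all_absent p n (c : nat -> bool) :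
  expect p n (fun g2 => ind (all_below n (fun i => implb (c i) (negb (nth i g2 false))))) =
  (1 - p) ^ (count_true n c).
Proof.
  revert c; induction n; intros c.
  - rewrite expect_0. reflexivity.
  - assert (Hx : forall b, (fun g => ind (all_below (S n) (fun i => implb (c i) (negb (nth i (b :: g) false))))) =
       (fun g => ind (implb (c 0%nat) (negb b)) * ind (all_below n (fun i => implb (c (S i)) (negb (nth i g false)))))).
    { intros b. apply functional_extensionality. intros g. rewrite all_below_S_l. apply ind_andb. }
    rewrite expect_S, (Hx true), (Hx false), !expect_scal, (IHn (fun i => c (S i))).
    rewrite count_true_S_l. destruct (c 0%nat); simpl; ring.
Qed.

Lemma expect_no_edge_across p n s :
  expect p (length (pairs n)) (fun g => ind (no_edge_across n s g)) =
  (1 - p) ^ (count_true n s * count_true n (fun i => negb (s i))).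
Proof.
  induction n.
  - simpl. rewrite expect_0. reflexivity.
  - rewrite expect_graph_S.
    rewrite (expect_ext p _ _ (fun g1 => (1 - p) ^ (count_true n (fun i => xorb (s i) (s n)))
                                        * ind (no_edge_across n s g1))).
    + rewrite expect_scal, IHn, <- pow_add. f_equal.
      rewrite (count_true_ext n (fun i => xorb (s i) (s n)) (if s n then (fun i => negb (s i)) else s))
        by (intros; destruct (s n); [apply xorb_true_r | apply xorb_false_r]).
      simpl. destruct (s n); simpl; lia.
    + intros g1 H1.
      rewrite (expect_ext p n _ (fun g2 => ind (no_edge_across n s g1) * ind (no_new_edge_across n s g2)))
        by (intros; rewrite no_edge_across_app by auto; apply ind_andb).
      rewrite expect_scal. unfold no_new_edge_across. rewrite expect_all_absent. ring.
Qed.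

Definition bitf (s : list bool) (i : nat) : bool := nth i s false.

Lemma lsum_pow_count_true r n : lsum (bitlists n) (fun s => r ^ count_true n (bitf s)) = (1 + r) ^ n.
Proof.
  induction n. unfold lsum; simpl; ring.
  rewrite lsum_bitlists_S.
  rewrite (lsum_ext _ (fun s => r ^ count_true (S n) (bitf (true :: s))) (fun s => r * r ^ count_true n (bitf s)))
    by (intros; rewrite count_true_S_l; unfold bitf; simpl; ring).
  rewrite (lsum_ext _ (fun s => r ^ count_true (S n) (bitf (false :: s))) (fun s => r ^ count_true n (bitf s)))
    by (intros; rewrite count_true_S_l; unfold bitf; simpl; ring).
  rewrite lsum_scal, IHn. simpl. ring.
Qed.

Lemma lsum_pow_count_false r n :
  lsum (bitlists n) (fun s => r ^ count_true n (fun i => negb (bitf s i))) = (1 + r) ^ n.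
Proof.
  induction n. unfold lsum; simpl; ring.
  rewrite lsum_bitlists_S.
  rewrite (lsum_ext _ (fun s => r ^ count_true (S n) (fun i => negb (bitf (true :: s) i)))
                      (fun s => r ^ count_true n (fun i => negb (bitf s i))))
    by (intros; rewrite count_true_S_l; unfold bitf; simpl; ring).
  rewrite (lsum_ext _ (fun s => r ^ count_true (S n) (fun i => negb (bitf (false :: s) i)))
                      (fun s => r * r ^ count_true n (fun i => negb (bitf s i))))
    by (intros; rewrite count_true_S_l; unfold bitf; simpl; ring).
  rewrite lsum_scal, IHn. simpl. ring.
Qed.

Lemma lsum_count_true_eq0 n : lsum (bitlists n) (fun s => ind (Nat.eqb (count_true n (bitf s)) 0)) = 1.
Proof.
  induction n. unfold lsum; simpl; ring.
  rewrite lsum_bitlists_S.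
  rewrite (lsum_ext _ (fun s => ind (Nat.eqb (count_true (S n) (bitf (true :: s))) 0)) (fun s => 0 * 0))
    by (intros; rewrite count_true_S_l; unfold bitf; simpl; ring).
  rewrite (lsum_ext _ (fun s => ind (Nat.eqb (count_true (S n) (bitf (false :: s))) 0))
                      (fun s => ind (Nat.eqb (count_true n (bitf s)) 0)))
    by (intros; rewrite count_true_S_l; unfold bitf; simpl; reflexivity).
  rewrite lsum_scal, IHn. ring.
Qed.

Lemma lsum_count_false_eq0 n :
  lsum (bitlists n) (fun s => ind (Nat.eqb (count_true n (fun i => negb (bitf s i))) 0)) = 1.
Proof.
  induction n. unfold lsum; simpl; ring.
  rewrite lsum_bitlists_S.
  rewrite (lsum_ext _ (fun s => ind (Nat.eqb (count_true (S n) (fun i => negb (bitf (false :: s) i))) 0))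
                      (fun s => 0 * 0))
    by (intros; rewrite count_true_S_l; unfold bitf; simpl; ring).
  rewrite (lsum_ext _ (fun s => ind (Nat.eqb (count_true (S n) (fun i => negb (bitf (true :: s) i))) 0))
                      (fun s => ind (Nat.eqb (count_true n (fun i => negb (bitf s i))) 0)))
    by (intros; rewrite count_true_S_l; unfold bitf; simpl; reflexivity).
  rewrite lsum_scal, IHn. ring.
Qed.

Lemma pow_le_1 x k : 0 <= x <= 1 -> 0 <= x ^ k <= 1.
Proof. intros Hx. induction k; simpl. lra. nra. Qed.

Lemma pow_le_pow_le_1 x a b : 0 <= x <= 1 -> (a <= b)%nat -> x ^ b <= x ^ a.
Proof.
  intros Hx Hab. replace b with (a + (b - a))%nat by lia. rewrite pow_add.
  assert (0 <= x ^ a) by (apply pow_le; lra).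
  pose proof (pow_le_1 x (b - a) Hx). nra.
Qed.

(** The larger side of the split has at least [n/2] vertices, so [2 kt kf >= n min kt kf]. *)
Lemma pow_split_le q n kt kf : 0 <= q <= 1 -> (kt + kf = n)%nat ->
  q ^ (kt * kf) <= (sqrt q ^ n) ^ kt + (sqrt q ^ n) ^ kf.
Proof.
  intros Hq Hn. set (sq := sqrt q).
  assert (Hsq : 0 <= sq <= 1).
  { unfold sq. split. apply sqrt_pos. rewrite <- sqrt_1. apply sqrt_le_1_alt. lra. }
  assert (Hq2 : q = sq ^ 2) by (unfold sq; rewrite pow2_sqrt; lra).
  rewrite Hq2, <- !pow_mult.
  assert (0 <= (sq ^ (n * kt))) by (apply pow_le; lra).
  assert (0 <= (sq ^ (n * kf))) by (apply pow_le; lra).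
  destruct (Nat.le_gt_cases (2 * kt) n).
  - assert (sq ^ (2 * (kt * kf)) <= sq ^ (n * kt)) by (apply pow_le_pow_le_1; auto; nia). lra.
  - assert (sq ^ (2 * (kt * kf)) <= sq ^ (n * kf)) by (apply pow_le_pow_le_1; auto; nia). lra.
Qed.

Definition proper_split n s :=
  negb (Nat.eqb (count_true n (bitf s)) 0) && negb (Nat.eqb (count_true n (fun i => negb (bitf s i))) 0).

Definition disconnected n g :=
  existsb (fun s => proper_split n s && no_edge_across n (bitf s) g) (bitlists n).

(** Union bound over the splittings [s]: a split with [k] and [n - k] vertices has
    no crossing edge with probability [(1-p)^(k(n-k))]. *)
Lemma expect_disconnected_le p n : 0 <= p <= 1 ->
  expect p (length (pairs n)) (fun g => ind (disconnected n g)) <= 2 * ((1 + sqrt (1 - p) ^ n) ^ n - 1).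
Proof.
  intros Hp. set (r := sqrt (1 - p) ^ n).
  assert (Hr : 0 <= r) by (unfold r; apply pow_le; apply sqrt_pos).
  eapply Rle_trans.
  { apply expect_le. auto. intros g _. apply (ind_existsb (fun s => proper_split n s && no_edge_across n (bitf s) g)). }
  rewrite expect_lsum.
  rewrite (lsum_ext _ _ (fun s => ind (proper_split n s)
             * (1 - p) ^ (count_true n (bitf s) * count_true n (fun i => negb (bitf s i))))).
  2:{ intros s _.
      rewrite (expect_ext p _ _ (fun g => ind (proper_split n s) * ind (no_edge_across n (bitf s) g)))
        by (intros; apply ind_andb).
      rewrite expect_scal, expect_no_edge_across. reflexivity. }
  eapply Rle_trans.
  { apply lsum_le. intros s Hs.
    instantiate (1 := fun s => (r ^ count_true n (bitf s) - ind (Nat.eqb (count_true n (bitf s)) 0)) +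
      (r ^ count_true n (fun i => negb (bitf s i)) - ind (Nat.eqb (count_true n (fun i => negb (bitf s i))) 0))).
    simpl. pose proof (count_true_negb n (bitf s)) as Hsplit.
    pose proof (pow_split_le (1 - p) n _ _ ltac:(lra) Hsplit). fold r in H.
    unfold proper_split.
    destruct (Nat.eqb_spec (count_true n (bitf s)) 0) as [E1|E1];
      destruct (Nat.eqb_spec (count_true n (fun i => negb (bitf s i))) 0) as [E2|E2]; simpl.
    - rewrite E1, E2. simpl. lra.
    - rewrite E1. simpl. assert (0 <= r ^ count_true n (fun i => negb (bitf s i))) by (apply pow_le; auto). lra.
    - rewrite E2. simpl. assert (0 <= r ^ count_true n (bitf s)) by (apply pow_le; auto). lra.
    - lra. }
  rewrite lsum_plus, !lsum_minus, lsum_pow_count_true, lsum_pow_count_false,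
    lsum_count_true_eq0, lsum_count_false_eq0. lra.
Qed.

Lemma bernoulli_ineq r n : 0 <= r <= 1 -> 1 - INR n * r <= (1 - r) ^ n.
Proof.
  intros Hr. induction n. simpl. lra.
  rewrite S_INR. simpl. assert (0 <= INR n) by apply pos_INR. nra.
Qed.

Lemma pow_one_plus_small r n : 0 <= r -> INR n * r <= 1/2 -> (1 + r) ^ n - 1 <= 2 * INR n * r.
Proof.
  intros Hr Hnr. destruct n. { simpl. lra. }
  assert (1 <= INR (S n)) by (rewrite S_INR; pose proof (pos_INR n); lra).
  set (A := (1 + r) ^ S n). set (B := (1 - r) ^ S n).
  assert (HB : 1 - INR (S n) * r <= B) by (apply bernoulli_ineq; nra).
  assert (HAB : A * B <= 1) by (unfold A, B; rewrite <- Rpow_mult_distr; apply pow_le_1; nra).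
  assert (HA : 1 <= A) by (unfold A; apply pow_R1_Rle; lra).
  assert (A * (1 - INR (S n) * r) <= 1) by nra.
  nra.
Qed.

Lemma prob_disconnected_le p n : (2 <= n)%nat -> 0 <= p <= 1 ->
  INR n * sqrt (1 - p) ^ n <= / INR n ->
  expect p (length (pairs n)) (fun g => ind (disconnected n g)) <= 4 / INR n.
Proof.
  intros Hn Hp Hr. assert (HN : 2 <= INR n) by (apply (le_INR 2); auto).
  eapply Rle_trans. { apply expect_disconnected_le; auto. }
  assert (Hr0 : 0 <= sqrt (1 - p) ^ n) by (apply pow_le, sqrt_pos).
  assert (/ INR n <= / 2) by (apply Rinv_le_contravar; lra).
  pose proof (pow_one_plus_small (sqrt (1 - p) ^ n) n Hr0 ltac:(lra)).
  unfold Rdiv. lra.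
Qed.

(** * The principal eigenvector of a connected graph *)

Lemma connected_split_crossed n g (s : nat -> bool) i j :
  disconnected n g = false -> (i < n)%nat -> (j < n)%nat -> s i = true -> s j = false ->
  no_edge_across n s g = false.
Proof.
  intros HB Hi Hj Hsi Hsj.
  destruct (no_edge_across n s g) eqn:Hc; auto. exfalso.
  set (sl := map s (seq 0 n)).
  assert (Hsl : forall k, (k < n)%nat -> bitf sl k = s k).
  { intros k Hk. unfold bitf, sl. rewrite (nth_indep _ false (s 0%nat)) by (rewrite length_map, length_seq; lia).
    rewrite map_nth, seq_nth by lia. reflexivity. }
  assert (Hin : In sl (bitlists n)) by (apply bitlists_complete; unfold sl; rewrite length_map, length_seq; auto).
  enough (disconnected n g = true) by congruence.
  apply existsb_exists. exists sl. split; auto. apply andb_true_iff. split.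
  - unfold proper_split. apply andb_true_iff. split; apply negb_true_iff; apply Nat.eqb_neq.
    + apply (count_true_neq0 n _ i); auto. rewrite Hsl; auto.
    + apply (count_true_neq0 n _ j); auto. rewrite Hsl, Hsj; auto.
  - rewrite no_edge_acrossP in *. intros a b Ha Hb H1 H2. rewrite Hsl in H1, H2 by auto. apply Hc; auto.
Qed.

Lemma connected_deg_pos n g i : (2 <= n)%nat -> disconnected n g = false -> (i < n)%nat -> 0 < deg n g i.
Proof.
  intros Hn HB Hi.
  destruct (Rlt_dec 0 (deg n g i)) as [H|H]; auto. exfalso.
  assert (Hd : deg n g i = 0) by (pose proof (deg_nonneg n g i); lra).
  set (s := fun k => Nat.eqb k i).
  assert (exists j, (j < n)%nat /\ j <> i) as [j [Hj Hji]]
    by (destruct (Nat.eq_dec i 0); [exists 1%nat | exists 0%nat]; lia).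
  assert (Hc : no_edge_across n s g = false)
    by (apply (connected_split_crossed n g s i j); auto; unfold s; [apply Nat.eqb_refl | apply Nat.eqb_neq; auto]).
  enough (no_edge_across n s g = true) by congruence.
  apply no_edge_acrossP. intros a b Ha Hb H1 H2. unfold s in H1. apply Nat.eqb_eq in H1. subst a.
  assert (adj n g i b = 0) by (apply (sumR_eq0_nonneg n (adj n g i)); auto; intros; apply adj_nonneg).
  unfold adj in H0. destruct (edgeb n g i b); auto. lra.
Qed.

Section PositiveDegrees.
Variables (n : nat) (g : list bool).
Hypothesis deg_pos : forall i, (i < n)%nat -> 0 < deg n g i.

Let sqrt_deg_pos i : (i < n)%nat -> 0 < sqrt (deg n g i).
Proof. intros Hi. apply sqrt_lt_R0; auto. Qed.

Lemma sqrt_deg_eigpair : is_eigpair n (nadj n g) 1 (fun j => sqrt (deg n g j)).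
Proof.
  intros i Hi. unfold nadj. pose proof (sqrt_deg_pos i Hi).
  rewrite (sumR_ext n _ (fun j => / sqrt (deg n g i) * adj n g i j)).
  - rewrite sumR_scal. change (sumR n (adj n g i)) with (deg n g i).
    rewrite <- (sqrt_sqrt (deg n g i)) at 2 by (pose proof (deg_pos i Hi); lra). field. lra.
  - intros j Hj. pose proof (sqrt_deg_pos j Hj). field. split; lra.
Qed.

Lemma eigpair_div_sqrt_deg lam v : is_eigpair n (nadj n g) lam v ->
  forall i, (i < n)%nat ->
  sumR n (fun j => adj n g i j * (v j / sqrt (deg n g j))) = lam * deg n g i * (v i / sqrt (deg n g i)).
Proof.
  intros Hpair i Hi. specialize (Hpair i Hi). unfold nadj in Hpair.
  pose proof (sqrt_deg_pos i Hi).
  rewrite (sumR_ext n _ (fun j => / sqrt (deg n g i) * (adj n g i j * (v j / sqrt (deg n g j))))) in Hpair.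
  2:{ intros j Hj. pose proof (sqrt_deg_pos j Hj). field. split; lra. }
  rewrite sumR_scal in Hpair.
  replace (sumR n (fun j => adj n g i j * (v j / sqrt (deg n g j)))) with (sqrt (deg n g i) * (lam * v i))
    by (rewrite <- Hpair; field; lra).
  rewrite <- (sqrt_sqrt (deg n g i)) at 2 by (pose proof (deg_pos i Hi); lra). field. lra.
Qed.

(** Maximum principle: a harmonic function ([sum_j A_ij w_j = d_i w_i]) attaining its
    maximum at [i0] is constant, since the set where the maximum is attained is
    closed under taking neighbours. *)
Lemma harmonic_max_const (w : nat -> R) i0 : disconnected n g = false -> (i0 < n)%nat ->
  (forall i, (i < n)%nat -> sumR n (fun j => adj n g i j * w j) = deg n g i * w i) ->
  (forall j, (j < n)%nat -> w j <= w i0) ->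
  forall j, (j < n)%nat -> w j = w i0.
Proof.
  intros HB Hi0 Hharm Hmax. set (M := w i0) in *.
  set (s := fun k => if Req_EM_T (w k) M then true else false).
  assert (Hcl : no_edge_across n s g = true).
  { apply no_edge_acrossP. intros a b Ha Hb Hsa Hsb. unfold s in Hsa, Hsb.
    destruct (Req_EM_T (w a) M) as [Ea|]; [|discriminate]. destruct (Req_EM_T (w b) M) as [|Eb]; [discriminate|].
    assert (Hz : sumR n (fun j => adj n g a j * (M - w j)) = 0).
    { rewrite (sumR_ext n _ (fun j => M * adj n g a j - adj n g a j * w j)) by (intros; ring).
      rewrite sumR_minus, sumR_scal, Hharm by auto. change (sumR n (adj n g a)) with (deg n g a). rewrite Ea. ring. }
    assert (adj n g a b * (M - w b) = 0).
    { apply (sumR_eq0_nonneg n (fun j => adj n g a j * (M - w j))); auto.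
      intros j Hj. pose proof (adj_nonneg n g a j). pose proof (Hmax j Hj). nra. }
    assert (adj n g a b = 0) by (apply Rmult_integral in H; destruct H; auto; lra).
    unfold adj in H0. destruct (edgeb n g a b); auto. lra. }
  intros j Hj. destruct (Req_EM_T (w j) M) as [|Ej]; auto. exfalso.
  enough (no_edge_across n s g = false) by congruence.
  apply (connected_split_crossed n g s i0 j); auto; unfold s.
  - destruct (Req_EM_T (w i0) M); auto.
  - destruct (Req_EM_T (w j) M); auto. contradiction.
Qed.

End PositiveDegrees.

Lemma normalize_sqrt_multiple n (d v : nat -> R) M : (1 <= n)%nat -> (forall i, (i < n)%nat -> 0 < d i) ->
  0 < M -> (forall j, (j < n)%nat -> v j = M * sqrt (d j)) -> sumR n (fun i => v i ^2) = 1 ->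
  forall i, (i < n)%nat -> v i = sqrt (d i) / sqrt (sumR n d).
Proof.
  intros Hn Hd HM Hv Hunit.
  assert (HsS : 0 < sqrt (sumR n d)) by (apply sqrt_lt_R0, sumR_pos; auto).
  assert (HM2 : (M * sqrt (sumR n d)) ^ 2 = 1 ^ 2).
  { rewrite Rpow_mult_distr, pow2_sqrt, <- sumR_scal, pow1, <- Hunit by (apply Rlt_le, sumR_pos; auto).
    apply sumR_ext. intros j Hj. rewrite Hv by auto.
    rewrite Rpow_mult_distr, pow2_sqrt by (pose proof (Hd j Hj); lra). reflexivity. }
  assert (HMS : M * sqrt (sumR n d) = 1).
  { assert (0 < M * sqrt (sumR n d)) by (apply Rmult_lt_0_compat; auto).
    set (t := M * sqrt (sumR n d)) in *. nra. }
  intros i Hi. rewrite Hv by auto.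
  replace M with (/ sqrt (sumR n d)) by (apply (Rmult_eq_reg_r (sqrt (sumR n d))); [rewrite HMS, Rinv_l|]; lra).
  field. lra.
Qed.

(** [v / sqrt d] is harmonic for the eigenvalue [lam]; at its maximum [lam d w <= d w],
    and [lam >= 1] because [sqrt d] is an eigenvector for the eigenvalue [1]. *)
Lemma principal_eigvec_sqrt_deg n g v : (2 <= n)%nat -> disconnected n g = false ->
  principal_unit_nonneg_eigvec n (nadj n g) v ->
  forall i, (i < n)%nat -> v i = sqrt (deg n g i) / sqrt (sumR n (deg n g)).
Proof.
  intros Hn HB [lam [_ [Hmax [Hpair [Hunit Hnn]]]]].
  assert (deg_pos : forall i, (i < n)%nat -> 0 < deg n g i) by (intros; apply connected_deg_pos; auto).
  assert (sqrt_deg_pos : forall i, (i < n)%nat -> 0 < sqrt (deg n g i)) by (intros; apply sqrt_lt_R0; auto).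
  set (d := deg n g) in *. set (w := fun j => v j / sqrt (d j)).
  assert (Hlam1 : 1 <= Rabs lam).
  { rewrite <- Rabs_R1. apply Hmax. exists (fun j => sqrt (d j)). split.
    - apply sqrt_deg_eigpair; auto.
    - exists 0%nat. split. lia. pose proof (sqrt_deg_pos 0%nat ltac:(lia)). lra. }
  assert (Hw0 : forall j, (j < n)%nat -> 0 <= w j).
  { intros j Hj. unfold w. pose proof (Hnn j Hj). pose proof (sqrt_deg_pos j Hj).
    apply Rmult_le_pos; [lra | apply Rlt_le, Rinv_0_lt_compat; lra]. }
  assert (Hrel := eigpair_div_sqrt_deg n g deg_pos lam v Hpair). fold d w in Hrel.
  destruct (argmax_below w n) as [i0 [Hi0 Hmaxw]]. lia.
  assert (HM : 0 < w i0).
  { destruct (sumR_neq0_exists n (fun i => v i ^ 2)) as [k [Hk Hvk]]. lra.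
    assert (0 < v k)
      by (pose proof (Hnn k Hk); destruct (Req_dec (v k) 0) as [E|]; [rewrite E in Hvk; simpl in Hvk|]; lra).
    assert (0 < w k) by (unfold w; apply Rdiv_lt_0_compat; auto using sqrt_deg_pos).
    specialize (Hmaxw k Hk). lra. }
  assert (Hd0 : 0 < d i0) by (apply deg_pos; auto).
  assert (Hup : sumR n (fun j => adj n g i0 j * w j) <= w i0 * d i0).
  { unfold d, deg. rewrite <- sumR_scal. apply sumR_le. intros j Hj.
    specialize (Hmaxw j Hj). pose proof (adj_nonneg n g i0 j). nra. }
  assert (Hlo : 0 <= sumR n (fun j => adj n g i0 j * w j)).
  { apply sumR_nonneg. intros j Hj. pose proof (adj_nonneg n g i0 j). pose proof (Hw0 j Hj). nra. }
  rewrite Hrel in Hup, Hlo by auto. change (v i0 / sqrt (d i0)) with (w i0) in Hup, Hlo.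
  assert (Hlam : lam = 1).
  { assert (0 < d i0 * w i0) by (apply Rmult_lt_0_compat; auto).
    assert (lam <= 1) by nra. assert (0 <= lam) by nra.
    rewrite Rabs_right in Hlam1 by lra. lra. }
  subst lam.
  assert (Hall : forall j, (j < n)%nat -> w j = w i0).
  { apply (harmonic_max_const n g); auto. intros i Hi. rewrite Hrel by auto. unfold w, d. ring. }
  assert (Hv : forall j, (j < n)%nat -> v j = w i0 * sqrt (d j)).
  { intros j Hj. rewrite <- (Hall j Hj). unfold w. pose proof (sqrt_deg_pos j Hj). field. lra. }
  apply (normalize_sqrt_multiple n d v (w i0)); auto. lia.
Qed.


(** * The deterministic estimate *)

Lemma rtil_sq_sqrt_deg n (d v : nat -> R) : (1 <= n)%nat -> (forall i, (i < n)%nat -> 0 <= d i) ->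
  0 < sumR n d -> (forall i, (i < n)%nat -> v i = sqrt (d i) / sqrt (sumR n d)) ->
  rtil_sq n v = 1 - (sumR n (fun i => sqrt (d i)))^2 / (INR n * sumR n d).
Proof.
  intros Hn Hd HS Hv. unfold rtil_sq.
  set (S := sumR n d) in *. set (A := sumR n (fun i => sqrt (d i))).
  assert (HN : 0 < INR n) by (apply lt_0_INR; lia).
  set (N := INR n) in *.
  assert (Hsn : 0 < sqrt N) by (apply sqrt_lt_R0; auto).
  assert (HsS : 0 < sqrt S) by (apply sqrt_lt_R0; auto).
  assert (Hsn2 : sqrt N * sqrt N = N) by (apply sqrt_sqrt; lra).
  assert (HsS2 : sqrt S * sqrt S = S) by (apply sqrt_sqrt; lra).
  set (sn := sqrt N) in *. set (sS := sqrt S) in *.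
  assert (Hc : sumR n (fun i => / sn * v i) = A / (sn * sS)).
  { rewrite (sumR_ext n _ (fun i => / (sn * sS) * sqrt (d i))) by (intros; rewrite Hv by auto; field; lra).
    rewrite sumR_scal. unfold A. field. lra. }
  rewrite Hc. set (c := A / (sn * sS)).
  rewrite (sumR_ext n _ (fun i => / (sn * sn) + ((-2 * c / (sn * sS)) * sqrt (d i) + (c^2 / (sS * sS)) * d i))).
  2:{ intros i Hi. rewrite Hv by auto. assert (sqrt (d i) * sqrt (d i) = d i) by (apply sqrt_sqrt; apply Hd; auto).
      set (sd := sqrt (d i)) in *. rewrite <- H. field. lra. }
  rewrite !sumR_plus, !sumR_scal, sumR_const. fold A. fold S.
  change (INR n) with N. rewrite Hsn2, HsS2. unfold c. rewrite <- Hsn2, <- HsS2. field. split; lra.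
Qed.

Definition svar n (f : nat -> R) := sumR n (fun i => f i ^2) - (sumR n f)^2 / INR n.

Lemma svar_le_sum_sq n f k : (1 <= n)%nat -> svar n f <= sumR n (fun i => (f i - k)^2).
Proof.
  intros Hn. rewrite sumR_sq_dev by auto. unfold svar.
  assert (0 < INR n) by (apply lt_0_INR; lia).
  assert (0 <= INR n * (sumR n f / INR n - k) ^ 2) by (apply Rmult_le_pos; [lra | apply pow2_ge_0]). lra.
Qed.

Lemma svar_eq_sum_sq_mean n f : (1 <= n)%nat ->
  svar n f = sumR n (fun i => (f i - sumR n f / INR n)^2).
Proof. intros Hn. rewrite sumR_sq_dev by auto. unfold svar. ring. Qed.

Lemma svar_perturb_bounds n k u r t : (1 <= n)%nat -> 0 < t -> sumR n u = 0 ->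
  (1 - t) * sumR n (fun i => u i ^2) - sumR n (fun i => r i ^2) / t <= svar n (fun i => k + u i - r i) /\
  svar n (fun i => k + u i - r i) <= (1 + t) * sumR n (fun i => u i ^2) + (1 + 1 / t) * sumR n (fun i => r i ^2).
Proof.
  intros Hn Ht Hu. assert (0 < INR n) by (apply lt_0_INR; lia).
  split.
  - set (rb := sumR n r / INR n).
    rewrite svar_eq_sum_sq_mean by auto.
    replace (sumR n (fun i => k + u i - r i) / INR n) with (k - rb)
      by (rewrite sumR_minus, sumR_plus, sumR_const, Hu; unfold rb; field; lra).
    assert (Hv : sumR n (fun i => (r i - rb)^2) <= sumR n (fun i => r i ^2)).
    { unfold rb. rewrite <- svar_eq_sum_sq_mean by auto.
      rewrite (sumR_ext n (fun i => r i ^2) (fun i => (r i - 0)^2)) by (intros; ring).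
      apply svar_le_sum_sq; auto. }
    assert (Hpt : sumR n (fun i => (1 - t) * u i ^2 - (r i - rb)^2 / t)
                  <= sumR n (fun i => (k + u i - r i - (k - rb))^2)).
    { apply sumR_le. intros i Hi. set (a := u i). set (c := r i - rb).
      assert (t * ((a - c)^2 - ((1 - t) * a^2 - c^2 / t)) = (t * a - c)^2 + t * c^2) by (field; lra).
      assert (0 <= (t * a - c)^2) by apply pow2_ge_0.
      assert (0 <= t * c^2) by (apply Rmult_le_pos; [lra|apply pow2_ge_0]).
      assert (0 <= (a - c)^2 - ((1 - t) * a^2 - c^2 / t)) by (apply (Rmult_le_reg_l t); lra).
      replace (k + a - r i - (k - rb)) with (a - c) by (unfold c; ring). lra. }
    rewrite sumR_minus, sumR_scal in Hpt.
    rewrite (sumR_ext n (fun i => (r i - rb)^2 / t) (fun i => / t * (r i - rb)^2)) in Hpt by (intros; field; lra).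
    rewrite sumR_scal in Hpt.
    assert (/ t * sumR n (fun i => (r i - rb) ^ 2) <= / t * sumR n (fun i => r i ^2))
      by (apply Rmult_le_compat_l; [apply Rlt_le, Rinv_0_lt_compat|]; auto).
    unfold Rdiv. lra.
  - eapply Rle_trans. { apply (svar_le_sum_sq n _ k); auto. }
    rewrite <- !sumR_scal, <- sumR_plus. apply sumR_le. intros i Hi. set (a := u i). set (c := r i).
    assert (t * ((1 + t) * a ^ 2 + (1 + 1 / t) * c ^ 2 - (k + a - c - k)^2) = (t * a + c)^2) by (field; lra).
    assert (0 <= (t * a + c)^2) by apply pow2_ge_0.
    assert (0 <= (1 + t) * a ^ 2 + (1 + 1 / t) * c ^ 2 - (k + a - c - k)^2) by (apply (Rmult_le_reg_l t); lra).
    lra.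
Qed.

Lemma sqrt_taylor_bounds b x : 0 <= b -> b ^ 2 = 1 + x -> 0 <= 1 + x / 2 - b <= x ^ 2 / 2.
Proof.
  intros Hb Hbx. assert (Hx : -1 <= x) by nra.
  assert (Hprod : (1 + x / 2 - b) * (1 + x / 2 + b) = x^2 / 4) by nra.
  assert (Hpos : 1/2 <= 1 + x / 2 + b) by lra.
  assert (0 <= x^2) by nra.
  split; nra.
Qed.

Section SqrtDegrees.
Variables (n : nat) (mu : R) (d : nat -> R).
Hypotheses (n_pos : (1 <= n)%nat) (mu_pos : 0 < mu) (d_nonneg : forall i, (i < n)%nat -> 0 <= d i).

Let sum_dev := sumR n (fun i => d i - mu).
Let sum_dev2 := sumR n (fun i => (d i - mu)^2).
Let sum_dev4 := sumR n (fun i => (d i - mu)^4).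

Let sqrt_ratio_sq i : (i < n)%nat -> (sqrt (d i) / sqrt mu) ^ 2 = d i / mu.
Proof.
  intros Hi. unfold Rdiv. rewrite Rpow_mult_distr, pow_inv, !pow2_sqrt by (auto; lra).
  reflexivity.
Qed.

Let sum_sq_centered_ratio :
  let x := fun i => (d i - mu) / mu in
  sumR n (fun i => (x i / 2 - sumR n x / INR n / 2) ^2) = (sum_dev2 - sum_dev ^2 / INR n) / (4 * mu^2).
Proof.
  intros x. assert (HN : 0 < INR n) by (apply lt_0_INR; lia).
  assert (Hsx : sumR n x = sum_dev / mu).
  { unfold x, sum_dev. rewrite (sumR_ext n _ (fun i => / mu * (d i - mu))) by (intros; field; lra).
    rewrite sumR_scal. field. lra. }
  rewrite sumR_sq_dev by lia.
  rewrite (sumR_ext n (fun i => x i / 2) (fun i => /2 * x i)) by (intros; field).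
  rewrite (sumR_ext n (fun i => (x i / 2)^2) (fun i => / (4 * mu^2) * (d i - mu)^2))
    by (intros; unfold x; field; lra).
  rewrite !sumR_scal, Hsx. fold sum_dev2. field. split; lra.
Qed.

Let sum_sq_taylor_rem_le (r : nat -> R) :
  (forall i, (i < n)%nat -> 0 <= r i <= ((d i - mu) / mu) ^2 / 2) ->
  sumR n (fun i => r i ^2) <= sum_dev4 / (4 * mu^4).
Proof.
  intros Hr. replace (sum_dev4 / (4 * mu^4)) with (/ (4 * mu^4) * sum_dev4) by (unfold Rdiv; ring).
  unfold sum_dev4. rewrite <- sumR_scal. apply sumR_le. intros i Hi.
  destruct (Hr i Hi).
  replace (/ (4 * mu ^ 4) * (d i - mu) ^ 4) with ((((d i - mu) / mu) ^2 / 2)^2) by (field; lra).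
  apply pow_maj_Rabs. rewrite Rabs_right; lra.
Qed.

(** With [x_i = (d_i - mu)/mu] one has [sqrt (d_i/mu) = k + u_i - r_i] where
    [u_i = (x_i - mean x)/2] carries the variance and [0 <= r_i <= x_i^2/2]. *)
Lemma svar_sqrt_ratio_bounds t : 0 < t <= 1 ->
  sum_dev ^2 <= t^2 * INR n * sum_dev2 -> sum_dev4 <= t^2 * mu^2 * sum_dev2 ->
  (1 - 3 * t) * (sum_dev2 / (4 * mu^2)) <= svar n (fun i => sqrt (d i) / sqrt mu) <=
  (1 + 3 * t) * (sum_dev2 / (4 * mu^2)).
Proof.
  intros Ht Hdev Hdev4.
  assert (HN : 0 < INR n) by (apply lt_0_INR; lia).
  set (x := fun i => (d i - mu) / mu). set (xb := sumR n x / INR n).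
  set (r := fun i => 1 + x i / 2 - sqrt (d i) / sqrt mu).
  set (u := fun i => x i / 2 - xb / 2). set (W := sum_dev2 / (4 * mu^2)).
  assert (HW : 0 <= W).
  { unfold W, sum_dev2. apply Rmult_le_pos; [apply sumR_nonneg; intros; apply pow2_ge_0|].
    apply Rlt_le, Rinv_0_lt_compat. nra. }
  assert (Hu0 : sumR n u = 0).
  { unfold u. rewrite sumR_minus, (sumR_ext n (fun i => x i / 2) (fun i => /2 * x i)) by (intros; field).
    rewrite sumR_scal, sumR_const. unfold xb. field. lra. }
  assert (HU : sumR n (fun i => u i ^2) = (sum_dev2 - sum_dev ^2 / INR n) / (4 * mu^2))
    by apply sum_sq_centered_ratio.
  assert (HUhi : sumR n (fun i => u i ^2) <= W).
  { rewrite HU. unfold W. apply Rmult_le_compat_r; [apply Rlt_le, Rinv_0_lt_compat; nra|].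
    assert (0 <= sum_dev ^2 / INR n) by (apply Rmult_le_pos; [nra | apply Rlt_le, Rinv_0_lt_compat; lra]). lra. }
  assert (HUlo : (1 - t^2) * W <= sumR n (fun i => u i ^2)).
  { rewrite HU. unfold W, Rdiv. rewrite <- Rmult_assoc.
    apply Rmult_le_compat_r; [apply Rlt_le, Rinv_0_lt_compat; nra|].
    assert (sum_dev ^2 * / INR n <= t^2 * sum_dev2); [|lra].
    apply (Rmult_le_reg_r (INR n)); auto. rewrite Rmult_assoc, Rinv_l by lra. lra. }
  assert (HR : sumR n (fun i => r i ^2) <= t^2 * W).
  { eapply Rle_trans.
    - apply sum_sq_taylor_rem_le. intros i Hi. apply sqrt_taylor_bounds.
      + apply Rmult_le_pos; [apply sqrt_pos | apply Rlt_le, Rinv_0_lt_compat, sqrt_lt_R0; lra].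
      + rewrite sqrt_ratio_sq by auto. field. lra.
    - unfold W. apply (Rmult_le_reg_r (4 * mu^4)). apply Rmult_lt_0_compat; [lra | apply pow_lt; lra].
      replace (sum_dev4 / (4 * mu ^ 4) * (4 * mu ^ 4)) with sum_dev4 by (field; lra).
      replace (t ^ 2 * (sum_dev2 / (4 * mu ^ 2)) * (4 * mu ^ 4)) with (t^2 * mu^2 * sum_dev2) by (field; lra).
      lra. }
  assert (HR0 : 0 <= sumR n (fun i => r i ^2)) by (apply sumR_nonneg; intros; apply pow2_ge_0).
  destruct (svar_perturb_bounds n (1 + xb / 2) u r t n_pos ltac:(lra) Hu0) as [Hlo Hhi].
  replace (fun i => 1 + xb / 2 + u i - r i) with (fun i => sqrt (d i) / sqrt mu) in Hlo, Hhi
    by (apply functional_extensionality; intros i; unfold u, r; ring).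
  fold W. split.
  - assert (sumR n (fun i => r i ^2) / t <= t * W)
      by (apply (Rmult_le_reg_r t); [lra|]; unfold Rdiv; rewrite Rmult_assoc, Rinv_l, Rmult_1_r by lra; nra).
    assert ((1 - t) * ((1 - t^2) * W) <= (1 - t) * sumR n (fun i => u i ^2)) by (apply Rmult_le_compat_l; lra).
    nra.
  - assert ((1 + 1/t) * sumR n (fun i => r i ^2) <= (t + t^2) * W).
    { replace ((t + t^2) * W) with ((1 + 1/t) * (t^2 * W)) by (field; lra).
      apply Rmult_le_compat_l; auto. assert (0 < 1/t) by (apply Rdiv_lt_0_compat; lra). lra. }
    assert ((1 + t) * sumR n (fun i => u i ^2) <= (1 + t) * W) by (apply Rmult_le_compat_l; lra).
    nra.
Qed.

Lemma one_sub_sq_sum_sqrt_eq : 0 < sumR n d ->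
  1 - (sumR n (fun i => sqrt (d i)))^2 / (INR n * sumR n d) =
  svar n (fun i => sqrt (d i) / sqrt mu) / (INR n * (1 + sum_dev / (INR n * mu))).
Proof.
  intros HS. assert (HN : 0 < INR n) by (apply lt_0_INR; lia).
  assert (Hsmu : 0 < sqrt mu) by (apply sqrt_lt_R0; auto).
  assert (HSd : sumR n d = INR n * mu + sum_dev) by (unfold sum_dev; rewrite sumR_minus, sumR_const; ring).
  unfold svar.
  rewrite (sumR_ext n (fun i => (sqrt (d i) / sqrt mu)^2) (fun i => / mu * d i))
    by (intros; rewrite sqrt_ratio_sq by auto; unfold Rdiv; ring).
  rewrite (sumR_ext n (fun i => sqrt (d i) / sqrt mu) (fun i => / sqrt mu * sqrt (d i))) by (intros; unfold Rdiv; ring).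
  rewrite !sumR_scal.
  replace (1 + sum_dev / (INR n * mu)) with (sumR n d / (INR n * mu)) by (rewrite HSd; field; lra).
  rewrite Rpow_mult_distr, pow_inv, pow2_sqrt by lra. field. repeat split; lra.
Qed.

End SqrtDegrees.

(** With [e, 1/N <= t^2], the two factors [1/(1+e)] and [(N-1)/N] cost at most a
    relative [3t] on top of the [3t] of [B]. *)
Lemma rel_error_div_le N W B e t : 2 <= N -> 0 < W -> 0 < t <= 1/20 -> / N <= t^2 -> Rabs e <= t^2 ->
  (1 - 3 * t) * W <= B <= (1 + 3 * t) * W ->
  Rabs (B / (N * (1 + e)) - W * (N - 1) / N^2) <= 6 * t * (W * (N - 1) / N^2).
Proof.
  intros HN HW Ht Hh He [HB1 HB2]. set (h := / N) in *.
  assert (Ht2 : 0 < t^2 <= t / 20) by (split; nra).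
  assert (He2 : - t^2 <= e <= t^2) by (revert He; unfold Rabs; destruct (Rcase_abs e); lra).
  assert (HNe : 0 < N * (1 + e)) by nra.
  assert (Hh0 : 0 < h) by (apply Rinv_0_lt_compat; lra).
  replace (W * (N - 1) / N^2) with (W * (1 - h) / N) by (unfold h; field; lra).
  assert (Hc1 : (1 - h) * (1 + e) >= 1 - 2 * t^2) by nra.
  assert (Hc2 : (1 - h) * (1 + e) <= 1 + t^2) by nra.
  assert (Hup : B <= (1 + 6 * t) * ((1 - h) * (1 + e)) * W).
  { assert ((1 + 3 * t) <= (1 + 6 * t) * (1 - 2 * t^2)) by nra.
    assert ((1 + 6 * t) * (1 - 2 * t^2) * W <= (1 + 6 * t) * ((1 - h) * (1 + e)) * W)
      by (apply Rmult_le_compat_r; [lra|]; apply Rmult_le_compat_l; lra).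
    nra. }
  assert (Hlo : (1 - 6 * t) * ((1 - h) * (1 + e)) * W <= B).
  { assert ((1 - 6 * t) * (1 + t^2) <= 1 - 3 * t) by nra.
    assert ((1 - 6 * t) * ((1 - h) * (1 + e)) * W <= (1 - 6 * t) * (1 + t^2) * W)
      by (apply Rmult_le_compat_r; [lra|]; apply Rmult_le_compat_l; lra).
    nra. }
  set (iv := / (N * (1 + e))).
  assert (Hiv : 0 < iv) by (apply Rinv_0_lt_compat; lra).
  replace (B / (N * (1 + e)) - W * (1 - h) / N) with ((B - (1 - h) * (1 + e) * W) * iv)
    by (unfold iv, h; field; lra).
  replace (6 * t * (W * (1 - h) / N)) with ((6 * t * ((1 - h) * (1 + e)) * W) * iv)
    by (unfold iv, h; field; lra).
  apply Rabs_le. split.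
  - rewrite Ropp_mult_distr_l. apply Rmult_le_compat_r; lra.
  - apply Rmult_le_compat_r; lra.
Qed.

Lemma sqrt_deg_defect_approx n mu t (d : nat -> R) :
  (2 <= n)%nat -> 0 < mu -> 0 < t <= 1/20 -> (forall i, (i < n)%nat -> 0 <= d i) ->
  0 < sumR n (fun i => (d i - mu)^2) ->
  (sumR n (fun i => d i - mu))^2 <= t^2 * INR n * sumR n (fun i => (d i - mu)^2) ->
  (sumR n (fun i => d i - mu))^2 <= t^4 * INR n^2 * mu^2 ->
  sumR n (fun i => (d i - mu)^4) <= t^2 * mu^2 * sumR n (fun i => (d i - mu)^2) ->
  1 <= t^2 * INR n ->
  Rabs ((1 - (sumR n (fun i => sqrt (d i)))^2 / (INR n * sumR n d))
        - (INR n - 1) * sumR n (fun i => (d i - mu)^2) / (4 * INR n^2 * mu^2))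
    <= 6 * t * ((INR n - 1) * sumR n (fun i => (d i - mu)^2) / (4 * INR n^2 * mu^2)).
Proof.
  intros Hn Hmu Ht Hd HQ2 Hdev Hdev' Hdev4 Htn.
  assert (HN : 2 <= INR n) by (apply (le_INR 2); auto).
  set (e := sumR n (fun i => d i - mu) / (INR n * mu)).
  assert (He : Rabs e <= t^2).
  { apply Rabs_le. assert (HNmu : 0 < INR n * mu) by (apply Rmult_lt_0_compat; lra).
    assert (e^2 <= (t^2)^2); [|nra].
    unfold e, Rdiv. rewrite Rpow_mult_distr, pow_inv.
    apply (Rmult_le_reg_r ((INR n * mu)^2)); [apply pow_lt; lra|].
    rewrite Rmult_assoc, Rinv_l, Rmult_1_r by (apply pow_nonzero; lra).
    replace ((t^2)^2 * (INR n * mu)^2) with (t^4 * INR n^2 * mu^2) by ring. auto. }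
  assert (HS : 0 < sumR n d).
  { replace (sumR n d) with (INR n * mu * (1 + e))
      by (unfold e; rewrite sumR_minus, sumR_const; field; lra).
    apply Rmult_lt_0_compat; [nra|]. revert He; unfold Rabs; destruct (Rcase_abs e); nra. }
  rewrite (one_sub_sq_sum_sqrt_eq n mu d) by (auto; lia). fold e.
  replace ((INR n - 1) * sumR n (fun i => (d i - mu)^2) / (4 * INR n ^ 2 * mu ^ 2))
    with (sumR n (fun i => (d i - mu)^2) / (4 * mu^2) * (INR n - 1) / INR n^2) by (field; lra).
  apply rel_error_div_le; auto.
  - apply Rdiv_lt_0_compat; nra.
  - apply (Rmult_le_reg_r (INR n)); [lra|]. rewrite Rinv_l by lra. lra.
  - apply svar_sqrt_ratio_bounds; auto; lia || lra.
Qed.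

(** * Probability of the bad events *)

Lemma Rltb_false a b : Rltb a b = false <-> b <= a.
Proof. unfold Rltb. destruct (Rlt_dec a b); split; intros; try discriminate; try lra; auto. Qed.

Lemma Rltb_true a b : Rltb a b = true <-> a < b.
Proof. unfold Rltb. destruct (Rlt_dec a b); split; intros; auto; discriminate. Qed.

Definition mean_sum_dbar2 n p := INR n * (INR n - 1) * (p * (1 - p)).

Definition small_sum_dbar2 n p g := Rltb (sum_dbar2 n p g) (mean_sum_dbar2 n p / 2).
Definition large_sum_dbar n p t g := Rltb (t^2 * INR n * mean_sum_dbar2 n p / 2) (sum_dbar n p g ^2).
Definition large_sum_dbar4 n p t g :=
  Rltb (t^2 * ((INR n - 1) * p)^2 * mean_sum_dbar2 n p / 2) (sum_dbar4 n p g).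

Lemma rhs_eq n p g : (2 <= n)%nat -> 0 < p ->
  rhs n p g = (INR n - 1) * sum_dbar2 n p g / (4 * INR n^2 * ((INR n - 1) * p)^2).
Proof.
  intros Hn Hp. assert (HN : 2 <= INR n) by (apply (le_INR 2); auto).
  unfold rhs, sum_dbar2, dbar.
  rewrite (sumR_ext n _ (fun i => / INR n * (deg n g i - (INR n - 1) * p)^2)) by (intros; field; lra).
  rewrite sumR_scal. field. repeat split; nra.
Qed.

Lemma deviates_false_of_good n p t eps v g : (2 <= n)%nat -> 0 < p < 1 -> 0 < t <= 1/20 -> 6 * t <= eps ->
  (1 - p) / 2 <= t^2 * ((INR n - 1) * p) -> 1 <= t^2 * INR n ->
  disconnected n g = false -> small_sum_dbar2 n p g = false ->
  large_sum_dbar n p t g = false -> large_sum_dbar4 n p t g = false ->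
  principal_unit_nonneg_eigvec n (nadj n g) v ->
  deviates eps (rtil_sq n v) (rhs n p g) = false.
Proof.
  intros Hn Hp Ht Heps Hq Htn Hconn H2 H3 H4 Hv.
  unfold small_sum_dbar2, large_sum_dbar, large_sum_dbar4, mean_sum_dbar2 in *.
  rewrite Rltb_false in H2, H3, H4.
  unfold sum_dbar2, sum_dbar, sum_dbar4, dbar in *.
  set (N := INR n) in *. assert (HN : 2 <= N) by (unfold N; apply (le_INR 2); auto).
  set (mu := (N - 1) * p) in *. assert (Hmu : 0 < mu) by (unfold mu; nra).
  set (m := N * (N - 1) * (p * (1 - p))) in *. assert (Hm : 0 < m) by (unfold m; repeat apply Rmult_lt_0_compat; lra).
  set (d := deg n g) in *.
  assert (Hd : forall i, (i < n)%nat -> 0 < d i) by (intros; apply connected_deg_pos; auto).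
  rewrite (rtil_sq_sqrt_deg n d v); auto; try lia.
  2:{ intros i Hi. pose proof (Hd i Hi). lra. }
  2:{ apply sumR_pos; auto; lia. }
  2:{ apply principal_eigvec_sqrt_deg; auto. }
  rewrite rhs_eq by (auto; lra). unfold sum_dbar2, dbar. fold N mu d.
  assert (Hpos : 0 < (N - 1) * sumR n (fun i => (d i - mu)^2) / (4 * N^2 * mu^2)).
  { apply Rdiv_lt_0_compat; [apply Rmult_lt_0_compat; lra|].
    apply Rmult_lt_0_compat; [apply Rmult_lt_0_compat; [lra | apply pow_lt; lra] | apply pow_lt; lra]. }
  unfold deviates. apply Rltb_false. rewrite (Rabs_right ((N - 1) * _ / _)) by lra.
  eapply Rle_trans; [apply (sqrt_deg_defect_approx n mu t d); auto|]; fold N.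
  - intros i Hi. pose proof (Hd i Hi). lra.
  - lra.
  - assert (t^2 * N * (m / 2) <= t^2 * N * sumR n (fun i => (d i - mu)^2))
      by (apply Rmult_le_compat_l; nra).
    lra.
  - assert (t ^ 2 * N * m / 2 <= t^4 * N^2 * mu^2); [|lra].
    replace (t ^ 2 * N * m / 2) with ((t^2 * N * N * mu) * ((1 - p) / 2)) by (unfold m, mu; field).
    replace (t ^ 4 * N ^ 2 * mu ^ 2) with ((t^2 * N * N * mu) * (t^2 * mu)) by field.
    apply Rmult_le_compat_l; auto. assert (0 < t^2) by nra.
    assert (0 < t^2 * N * N * mu) by (repeat apply Rmult_lt_0_compat; lra). lra.
  - assert (t^2 * mu^2 * (m / 2) <= t^2 * mu^2 * sumR n (fun i => (d i - mu)^2))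
      by (apply Rmult_le_compat_l; nra).
    lra.
  - apply Rmult_le_compat_r; lra.
Qed.

Section BadEvents.
Variables (n : nat) (p t : R).
Hypotheses (n_ge2 : (2 <= n)%nat) (p_range : 0 < p < 1) (t_pos : 0 < t).

Let N := INR n.
Let mu := (N - 1) * p.
Let m := mean_sum_dbar2 n p.

Let N_ge2 : 2 <= N.
Proof. apply (le_INR 2); auto. Qed.

Let m_pos : 0 < m.
Proof. unfold m, mean_sum_dbar2. fold N. pose proof N_ge2. repeat apply Rmult_lt_0_compat; lra. Qed.

(** Chebyshev, via the second moment of [sum dbar_i^2]. *)
Lemma prob_small_sum_dbar2_le :
  expect p (length (pairs n)) (fun g => ind (small_sum_dbar2 n p g)) <= 32 / N + 8 / ((1 - p) * mu).
Proof.
  pose proof N_ge2. pose proof m_pos. set (q := 1 - p). set (s := p * q).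
  assert (Hq : 0 < q) by (unfold q; lra). assert (Hs : 0 < s) by (unfold s; nra).
  assert (Hmeq : m = N * (N - 1) * s) by reflexivity.
  eapply Rle_trans.
  { apply (expect_markov p _ (fun g => 4 * (sum_dbar2 n p g - m)^2) _ (m^2)); [lra | apply pow_lt; auto|].
    intros g _. unfold small_sum_dbar2. fold m. destruct (Rltb (sum_dbar2 n p g) (m / 2)) eqn:E; cbn [ind].
    - apply Rltb_true in E. nra.
    - rewrite Rmult_0_r. apply Rmult_le_pos; [lra | apply pow2_ge_0]. }
  rewrite (expect_ext p _ _ (fun g => 4 * sum_dbar2 n p g ^2 + ((-8 * m) * sum_dbar2 n p g + 4 * m^2)))
    by (intros; ring).
  rewrite !expect_plus, !expect_scal, expect_const, expect_sum_dbar2.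
  pose proof (expect_sum_dbar2_sq_le p n ltac:(lra)) as Hsq. fold N q s in Hsq |- *.
  rewrite <- Hmeq in Hsq |- *.
  apply Rle_trans with (4 * (2 * N ^ 3 * s ^ 2 + 2 * N ^ 2 * s) / m ^ 2).
  { apply Rmult_le_compat_r; [apply Rlt_le, Rinv_0_lt_compat, pow_lt; auto | lra]. }
  replace (4 * (2 * N ^ 3 * s ^ 2 + 2 * N ^ 2 * s) / m ^ 2) with (8 * N / (N - 1)^2 + 8 / ((N - 1) * (q * mu)))
    by (rewrite Hmeq; unfold mu, s; field; repeat split; lra).
  assert (8 * N / (N - 1)^2 <= 32 / N).
  { apply (Rmult_le_reg_r (N * (N - 1)^2)). apply Rmult_lt_0_compat; [lra | apply pow_lt; lra].
    replace (8 * N / (N - 1) ^ 2 * (N * (N - 1) ^ 2)) with (8 * N * N) by (field; lra).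
    replace (32 / N * (N * (N - 1) ^ 2)) with (32 * (N - 1)^2) by (field; lra). nra. }
  assert (8 / ((N - 1) * (q * mu)) <= 8 / (q * mu)).
  { assert (0 < q * mu) by (unfold mu; apply Rmult_lt_0_compat; nra).
    unfold Rdiv. apply Rmult_le_compat_l; [lra|]. apply Rinv_le_contravar; nra. }
  lra.
Qed.

Lemma prob_large_sum_dbar_le :
  expect p (length (pairs n)) (fun g => ind (large_sum_dbar n p t g)) <= 4 / (t^2 * N).
Proof.
  pose proof N_ge2. pose proof m_pos. assert (Ht2 : 0 < t^2) by nra.
  assert (Ha : 0 < t^2 * N * m / 2)
    by (apply Rdiv_lt_0_compat; [apply Rmult_lt_0_compat; [apply Rmult_lt_0_compat|] | ]; lra).
  eapply Rle_trans.
  { apply (expect_markov p _ (fun g => sum_dbar n p g ^2) _ (t^2 * N * m / 2)); [lra | auto|].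
    intros g _. unfold large_sum_dbar. fold N m. destruct (Rltb _ _) eqn:E; cbn [ind].
    - apply Rltb_true in E. lra.
    - rewrite Rmult_0_r. apply pow2_ge_0. }
  rewrite expect_sum_dbar_sq. fold N. unfold m, mean_sum_dbar2. fold N. right. field. repeat split; nra.
Qed.

Lemma prob_large_sum_dbar4_le : 1 <= mu ->
  expect p (length (pairs n)) (fun g => ind (large_sum_dbar4 n p t g)) <= 24 / (t^2 * mu) + 4 / (t^2 * mu^2).
Proof.
  intros Hmu. pose proof N_ge2. pose proof m_pos. assert (Ht2 : 0 < t^2) by nra.
  set (q := 1 - p). set (s := p * q). assert (Hq : 0 < q <= 1) by (unfold q; lra).
  assert (Ha : 0 < t^2 * mu^2 * m / 2)
    by (apply Rdiv_lt_0_compat; [apply Rmult_lt_0_compat; [apply Rmult_lt_0_compat; [|apply pow_lt]|] | ]; lra).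
  eapply Rle_trans.
  { apply (expect_markov p _ (sum_dbar4 n p) _ (t^2 * mu^2 * m / 2)); [lra | auto|].
    intros g _. unfold large_sum_dbar4. fold N mu m. destruct (Rltb _ _) eqn:E; cbn [ind].
    - apply Rltb_true in E. lra.
    - rewrite Rmult_0_r. apply sumR_nonneg. intros.
      replace (dbar n p g i ^4) with ((dbar n p g i ^2)^2) by ring. apply pow2_ge_0. }
  pose proof (expect_sum_dbar4_le p n ltac:(lra)) as HG. fold N q s in HG.
  apply Rle_trans with ((3 * N ^ 3 * s ^ 2 + N ^ 2 * s) / (t ^ 2 * mu ^ 2 * m / 2)).
  { apply Rmult_le_compat_r; [apply Rlt_le, Rinv_0_lt_compat; auto | auto]. }
  replace ((3 * N ^ 3 * s ^ 2 + N ^ 2 * s) / (t ^ 2 * mu ^ 2 * m / 2)) with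
    (6 * (N / (N - 1))^2 * q / (t^2 * mu) + 2 * (N / (N - 1)) / (t^2 * mu^2))
    by (unfold m, mean_sum_dbar2, s, mu; fold N q; field; repeat split; lra).
  assert (HNN : 1 <= N / (N - 1) <= 2).
  { split; apply (Rmult_le_reg_r (N - 1)); try lra; unfold Rdiv; rewrite Rmult_assoc, Rinv_l, Rmult_1_r by lra; lra. }
  assert (6 * (N / (N - 1))^2 * q / (t^2 * mu) <= 24 / (t^2 * mu)).
  { unfold Rdiv. apply Rmult_le_compat_r; [apply Rlt_le, Rinv_0_lt_compat, Rmult_lt_0_compat; lra|].
    assert ((N / (N - 1))^2 <= 4) by nra. nra. }
  assert (2 * (N / (N - 1)) / (t^2 * mu^2) <= 4 / (t^2 * mu^2)).
  { unfold Rdiv. apply Rmult_le_compat_r; [|lra].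
    apply Rlt_le, Rinv_0_lt_compat, Rmult_lt_0_compat; [lra | apply pow_lt; lra]. }
  lra.
Qed.

End BadEvents.

Lemma prob_deviates_le n p q t eps (v : list bool -> nat -> R) :
  (2 <= n)%nat -> 0 < p < 1 -> 0 < q <= 1 - p -> 0 < t <= 1/20 -> 6 * t <= eps ->
  1 <= (INR n - 1) * p -> (1 - p) / 2 <= t^2 * ((INR n - 1) * p) -> 1 <= t^2 * INR n ->
  INR n * sqrt (1 - p) ^ n <= / INR n ->
  (forall g, In g (graphs n) -> (forall i, (i < n)%nat -> 0 < deg n g i) ->
     principal_unit_nonneg_eigvec n (nadj n g) (v g)) ->
  prob n p (fun g => deviates eps (rtil_sq n (v g)) (rhs n p g)) <=
    (36 + 4 / t^2) / INR n + (8 / q + 28 / t^2) / ((INR n - 1) * p).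
Proof.
  intros Hn Hp Hq0 Ht Heps Hmu Hq Htn Hr Hv.
  assert (HN : 2 <= INR n) by (apply (le_INR 2); auto).
  assert (Hunion : forall g, length g = length (pairs n) ->
     ind (deviates eps (rtil_sq n (v g)) (rhs n p g)) <=
     ind (disconnected n g) + ind (small_sum_dbar2 n p g) + ind (large_sum_dbar n p t g)
     + ind (large_sum_dbar4 n p t g)).
  { intros g Hg.
    pose proof (ind_bounds (disconnected n g)). pose proof (ind_bounds (small_sum_dbar2 n p g)).
    pose proof (ind_bounds (large_sum_dbar n p t g)). pose proof (ind_bounds (large_sum_dbar4 n p t g)).
    pose proof (ind_bounds (deviates eps (rtil_sq n (v g)) (rhs n p g))).
    destruct (disconnected n g) eqn:E1; [simpl in *; lra|].
    destruct (small_sum_dbar2 n p g) eqn:E2; [simpl in *; lra|].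
    destruct (large_sum_dbar n p t g) eqn:E3; [simpl in *; lra|].
    destruct (large_sum_dbar4 n p t g) eqn:E4; [simpl in *; lra|].
    rewrite (deviates_false_of_good n p t eps (v g) g); auto; simpl; try lra.
    apply Hv; [apply bitlists_complete; auto|]. intros i Hi. apply connected_deg_pos; auto. }
  rewrite prob_expect. eapply Rle_trans; [apply expect_le; [lra | apply Hunion]|].
  rewrite !expect_plus.
  pose proof (prob_disconnected_le p n Hn ltac:(lra) Hr).
  pose proof (prob_small_sum_dbar2_le n p Hn Hp).
  pose proof (prob_large_sum_dbar_le n p t Hn Hp ltac:(lra)).
  pose proof (prob_large_sum_dbar4_le n p t Hn Hp ltac:(lra) Hmu).
  set (mu := (INR n - 1) * p) in *. set (N := INR n) in *.
  assert (Ht2 : 0 < t^2) by nra.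
  assert (4 / (t^2 * mu^2) <= 4 / (t^2 * mu)).
  { apply Rmult_le_compat_l; [lra|]. apply Rinv_le_contravar; [apply Rmult_lt_0_compat; lra|].
    apply Rmult_le_compat_l; nra. }
  assert (8 / ((1 - p) * mu) <= 8 / (q * mu)).
  { apply Rmult_le_compat_l; [lra|]. apply Rinv_le_contravar; [apply Rmult_lt_0_compat|]; nra. }
  replace ((36 + 4 / t ^ 2) / N + (8 / q + 28 / t ^ 2) / mu)
    with (4 / N + 32 / N + 8 / (q * mu) + 4 / (t^2 * N) + 24 / (t^2 * mu) + 4 / (t^2 * mu))
    by (field; repeat split; lra).
  lra.
Qed.

(** * Asymptotics *)

Lemma exp_pow a n : exp a ^ n = exp (INR n * a).
Proof.
  induction n. { simpl. rewrite Rmult_0_l, exp_0. reflexivity. }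
  rewrite S_INR. simpl. rewrite IHn, <- exp_plus. f_equal. ring.
Qed.

Lemma sqrt_one_sub_le_exp p : 0 <= p <= 1 -> sqrt (1 - p) <= exp (- p / 2).
Proof.
  intros Hp. assert (exp (- p / 2) ^ 2 = exp (- p)) by (rewrite exp_pow; f_equal; simpl; field).
  rewrite <- (sqrt_pow2 (exp (- p / 2))) by (apply Rlt_le, exp_pos).
  apply sqrt_le_1_alt. rewrite H. pose proof (exp_ineq1_le (- p)). lra.
Qed.

Lemma pow_sqrt_one_sub_le n p : 0 <= p <= 1 -> 0 < INR n -> 4 * ln (INR n) <= INR n * p ->
  INR n * sqrt (1 - p) ^ n <= / INR n.
Proof.
  intros Hp HN Hlog.
  assert (H1 : sqrt (1 - p) ^ n <= exp (INR n * (- p / 2))).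
  { rewrite <- exp_pow. apply pow_incr. split; [apply sqrt_pos | apply sqrt_one_sub_le_exp; auto]. }
  assert (H2 : exp (INR n * (- p / 2)) <= exp (-2 * ln (INR n))).
  { destruct (Req_dec (INR n * (- p / 2)) (-2 * ln (INR n))) as [E|E]; [rewrite E; lra|].
    apply Rlt_le, exp_increasing. lra. }
  replace (exp (-2 * ln (INR n))) with (/ (INR n * INR n)) in H2
    by (replace (-2 * ln (INR n)) with (- (ln (INR n) + ln (INR n))) by ring;
        rewrite exp_Ropp, exp_plus, exp_ln by lra; reflexivity).
  replace (/ INR n) with (INR n * / (INR n * INR n)) by (field; lra).
  apply Rmult_le_compat_l; lra.
Qed.

Lemma ln_ge_1 x : 3 <= x -> 1 <= ln x.
Proof.
  intros Hx. rewrite <- (ln_exp 1). pose proof exp_le_3.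
  destruct (Rle_lt_or_eq_dec (exp 1) x) as [Hlt|Heq]; [lra | |].
  - apply Rlt_le, ln_increasing; [apply exp_pos | auto].
  - rewrite Heq. lra.
Qed.

Lemma sparse_regime_eventually (p : nat -> R) K : (forall n, 0 < p n <= 1) ->
  Un_cv (fun n => ln (INR n) / (INR n * p n)) 0 ->
  exists N0, forall n, (N0 <= n)%nat ->
    (3 <= n)%nat /\ K <= INR n /\ K <= (INR n - 1) * p n /\ INR n * sqrt (1 - p n) ^ n <= / INR n.
Proof.
  intros Hp Hs. set (K' := Rmax 4 (2 * K)).
  destruct (Hs (/ K')) as [N1 HN1]. { apply Rinv_0_lt_compat. unfold K'. pose proof (Rmax_l 4 (2 * K)). lra. }
  destruct (INR_unbounded K) as [N2 HN2].
  exists (max N1 (max N2 3)). intros n Hn.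
  assert (HK' : 4 <= K' /\ 2 * K <= K') by (split; [apply Rmax_l | apply Rmax_r]).
  assert (Hn3 : 3 <= INR n) by (replace 3 with (INR 3) by (simpl; lra); apply le_INR; lia).
  assert (HnK : K < INR n) by (apply Rlt_le_trans with (INR N2); [auto | apply le_INR; lia]).
  destruct (Hp n) as [Hp0 Hp1]. assert (Hnp : 0 < INR n * p n) by (apply Rmult_lt_0_compat; lra).
  assert (Hlog : K' * ln (INR n) < INR n * p n).
  { specialize (HN1 n ltac:(lia)). unfold R_dist in HN1. rewrite Rminus_0_r in HN1.
    apply Rabs_def2 in HN1 as [HN1 _].
    apply (Rmult_lt_compat_l (K' * (INR n * p n))) in HN1; [|apply Rmult_lt_0_compat; lra].
    replace (K' * (INR n * p n) * (ln (INR n) / (INR n * p n))) with (K' * ln (INR n)) in HN1 by (field; lra).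
    replace (K' * (INR n * p n) * / K') with (INR n * p n) in HN1 by (field; lra). exact HN1. }
  pose proof (ln_ge_1 (INR n) Hn3).
  repeat split; try lia; try lra.
  - nra.
  - apply pow_sqrt_one_sub_le; [lra | lra | nra].
Qed.

Lemma one_le_mul_of_inv_le a x : 0 < a -> 1 / a <= x -> 1 <= a * x.
Proof.
  intros Ha Hx. apply (Rmult_le_reg_l (/ a)); [apply Rinv_0_lt_compat; auto|].
  rewrite <- Rmult_assoc, Rinv_l, Rmult_1_l, Rmult_1_r by lra. lra.
Qed.

Lemma div_add_div_lt a b C x y e : 0 < a -> 0 < b -> 0 < e -> a + b <= C ->
  2 * C / e <= x -> 2 * C / e <= y -> a / x + b / y < e.
Proof.
  intros Ha Hb He HC Hx Hy.
  assert (HK : 0 < 2 * C / e) by (apply Rdiv_lt_0_compat; lra).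
  assert (a / x <= a / (2 * C / e)) by (apply Rmult_le_compat_l; [lra | apply Rinv_le_contravar; lra]).
  assert (b / y <= b / (2 * C / e)) by (apply Rmult_le_compat_l; [lra | apply Rinv_le_contravar; lra]).
  assert (a / (2 * C / e) + b / (2 * C / e) = (a + b) / C * (e / 2)) by (field; lra).
  assert ((a + b) / C <= 1) by (apply (Rmult_le_reg_r C); [lra|]; unfold Rdiv; rewrite Rmult_assoc, Rinv_l; lra).
  assert (0 <= (a + b) / C) by (apply Rlt_le, Rdiv_lt_0_compat; lra).
  nra.
Qed.

Theorem lemma4p3 (p : nat -> R) (ut : nat -> list bool -> nat -> R)
  (Hp : forall n, 0 < p n <= 1)
  (Hsparse : Un_cv (fun n => ln (INR n) / (INR n * p n)) 0)
  (Hdense : exists c, c < 1 /\ exists N, forall n, (N <= n)%nat -> p n <= c)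
  (Hut : forall n g, In g (graphs n) -> (forall i, (i < n)%nat -> 0 < deg n g i) ->
         principal_unit_nonneg_eigvec n (nadj n g) (ut n g)) :
  forall eps, 0 < eps ->
    Un_cv (fun n => prob n (p n)
             (fun g => deviates eps (rtil_sq n (ut n g)) (rhs n (p n) g))) 0.
Proof.
  intros eps Heps er Her.
  set (t := Rmin (eps / 6) (1 / 20)).
  assert (Ht : 0 < t <= 1/20 /\ 6 * t <= eps)
    by (unfold t; pose proof (Rmin_l (eps / 6) (1 / 20)); pose proof (Rmin_r (eps / 6) (1 / 20));
        split; [split; [apply Rmin_glb_lt|]|]; lra).
  assert (Ht2 : 0 < t^2 <= 1) by (split; nra).
  destruct Hdense as [c [Hc [N1 HN1]]].
  set (a := 36 + 4 / t^2). set (b := 8 / (1 - c) + 28 / t^2).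
  assert (Hab : 0 < a /\ 0 < b)
    by (unfold a, b; split; repeat apply Rplus_lt_0_compat; try apply Rdiv_lt_0_compat; lra).
  destruct (sparse_regime_eventually p (Rmax (1 / t^2) (2 * (a + b) / er)) Hp Hsparse) as [N0 HN0].
  exists (max N0 N1). intros n Hn. unfold R_dist. rewrite Rminus_0_r.
  destruct (HN0 n ltac:(lia)) as [Hn3 [HKN [HKmu Hr]]]. specialize (HN1 n ltac:(lia)).
  assert (Hpn : 0 < p n < 1) by (specialize (Hp n); lra).
  pose proof (Rmax_l (1 / t^2) (2 * (a + b) / er)). pose proof (Rmax_r (1 / t^2) (2 * (a + b) / er)).
  assert (HtK : 1 <= t^2 * INR n /\ 1 <= t^2 * ((INR n - 1) * p n))
    by (split; apply one_le_mul_of_inv_le; lra).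
  rewrite Rabs_right by (apply Rle_ge, prob_nonneg; lra).
  eapply Rle_lt_trans; [apply (prob_deviates_le n (p n) (1 - c) t eps (ut n)); auto; try lia; nra|].
  fold a b. apply div_add_div_lt with (a + b); lra.
Qed.
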